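(* Let $p$ be a prime. For an operator $A\in\mathcal{B}(\mathbb{Q}_p(\mathbb{N}))$ the following are equivalent: (a) $A\in\mathcal{K}(\mathbb{Q}_p(\mathbb{N}))$; (b) the matrix entries of $A$ converge to zero, i.e. for every $\varepsilon>0$ only finitely many pairs $(i,j)$ satisfy $|A_{ij}|_p>\varepsilon$; (c) $A$ maps norm-bounded sets onto relatively norm-compact subsets of $\mathbb{Q}_p(\mathbb{N})$. Moreover, the set of operators with these properties is an ideal of $\mathcal{B}(\mathbb{Q}_p(\mathbb{N}))$ that is closed under $A\mapsto A^*$.
   Context: $\mathbb{Q}_p(\mathbb{N})$ is the set of maps $\xi:\mathbb{N}\to\mathbb{Q}_p$ with $|\xi(i)|_p\le1$ for all but finitely many $i$, a $\mathbb{Z}_p$-module under coordinatewise operations, with the topology $\tau$ in which $A\subseteq\mathbb{Q}_p(\mathbb{N})$ is open iff for every finite $P\subseteq\mathbb{N}$ the set $A\cap\big(\prod_{i\in P}\mathbb{Q}_p\times\prod_{j\notin P}\mathbb{Z}_p\big)$ is open in the product topology. $\mathcal{B}(\mathbb{Q}_p(\mathbb{N}))$ is the algebra of $\tau$-continuous $\mathbb{Z}_p$-linear maps; the norm on $\mathbb{Q}_p(\mathbb{N})$ is $\|\xi\|=\max_i|\xi(i)|_p$. Matrix entries: $A_{ij}=(A\delta_j)(i)$ where $\delta_j$ is the indicator of $\{j\}$. $\mathcal{K}(\mathbb{Q}_p(\mathbb{N}))$ is the set of operators mapping norm-bounded sets onto relatively $\tau$-compact sets. The adjoint $A^*$ is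 the unique operator in $\mathcal{B}(\mathbb{Q}_p(\mathbb{N}))$ with $\langle A\xi,\eta\rangle=\langle\xi,A^*\eta\rangle$ for the pairing $\langle\xi,\eta\rangle=\iota\big(\sum_i(\xi(i)\eta(i)+\mathbb{Z}_p)\big)$, $\iota:\mathbb{Q}_p/\mathbb{Z}_p\hookrightarrow\mathbb{R}/\mathbb{Z}\cong S^1$ canonical; its matrix is the transpose of that of $A$. *)

From HB Require Import structures.
From mathcomp Require Import all_boot all_order all_algebra.
From mathcomp Require Import reals.
From Stdlib Require List.
Set Implicit Arguments. Unset Strict Implicit. Unset Printing Implicit Defensive.
Import Order.TTheory GRing.Theory Num.Theory.
Local Open Scope ring_scope.

(* (K, abs) is the field Q_p of p-adic numbers with the p-adic absolute value,
   characterized up to isometric isomorphism as the completion of (Q, |.|_p):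
   a field with a non-archimedean absolute value, |p| = 1/p, in which Q is
   dense, and which is complete. *)
Record is_Qp (p : nat) (R : realType) (K : fieldType) (abs : K -> R) : Prop := {
  Qp_abs_ge0 : forall x, 0 <= abs x;
  Qp_abs_eq0 : forall x, abs x = 0 <-> x = 0;
  Qp_abs_mul : forall x y, abs (x * y) = abs x * abs y;
  Qp_abs_ultra : forall x y, abs (x + y) <= Num.max (abs x) (abs y);
  Qp_abs_p : abs (p%:R) = (p%:R)^-1;
  Qp_rat_dense : forall x (e : R), 0 < e -> exists q : rat, abs (x - ratr q) < e;
  Qp_complete : forall u : nat -> K,
     (forall e : R, 0 < e -> exists N, forall m n, (N <= m)%N -> (N <= n)%N ->
        abs (u m - u n) < e) ->
     exists l, forall e : R, 0 < e -> exists N, forall n, (N <= n)%N -> abs (u n - l) < e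
}.

Section QpN.
Variables (R : realType) (K : fieldType) (abs : K -> R).

Definition Zp (x : K) : Prop := abs x <= 1.

Definition QpN (x : nat -> K) : Prop := exists N, forall i, (N <= i)%N -> Zp (x i).

Definition XP (P : seq nat) (x : nat -> K) : Prop := forall j, j \notin P -> Zp (x j).

(* the topology tau: U open iff U cap X_P is open in the product topology
   of X_P for every finite P (basic neighbourhoods restrict finitely many
   coordinates) *)
Definition tau_open (U : (nat -> K) -> Prop) : Prop :=
  (forall x, U x -> QpN x) /\
  forall (P : seq nat) x, XP P x -> U x ->
    exists (n : nat) (e : R), 0 < e /\
      forall y, XP P y -> (forall i, (i < n)%N -> abs (y i - x i) < e) -> U y.

Definition tau_closure (S : (nat -> K) -> Prop) (x : nat -> K) : Prop :=
  QpN x /\ forall U, tau_open U -> U x -> exists y, U y /\ S y.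

Definition tau_compact (C : (nat -> K) -> Prop) : Prop :=
  (forall x, C x -> QpN x) /\
  forall (I : Type) (U : I -> (nat -> K) -> Prop),
    (forall i, tau_open (U i)) -> (forall x, C x -> exists i, U i x) ->
    exists s : list I, forall x, C x -> exists i, List.In i s /\ U i x.

Definition rel_tau_compact (S : (nat -> K) -> Prop) : Prop :=
  tau_compact (tau_closure S).

Definition normle (x : nat -> K) (r : R) : Prop := forall i, abs (x i) <= r.

(* open norm ball: ||y - x|| < e (the sup is attained iff bounded by some d < e) *)
Definition nball (x : nat -> K) (e : R) (y : nat -> K) : Prop :=
  QpN y /\ exists d, d < e /\ normle (fun i => y i - x i) d.

Definition norm_open (U : (nat -> K) -> Prop) : Prop :=
  (forall x, U x -> QpN x) /\
  forall x, U x -> exists e : R, 0 < e /\ forall y, nball x e y -> U y.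

Definition norm_closure (S : (nat -> K) -> Prop) (x : nat -> K) : Prop :=
  QpN x /\ forall U, norm_open U -> U x -> exists y, U y /\ S y.

Definition norm_compact (C : (nat -> K) -> Prop) : Prop :=
  (forall x, C x -> QpN x) /\
  forall (I : Type) (U : I -> (nat -> K) -> Prop),
    (forall i, norm_open (U i)) -> (forall x, C x -> exists i, U i x) ->
    exists s : list I, forall x, C x -> exists i, List.In i s /\ U i x.

Definition rel_norm_compact (S : (nat -> K) -> Prop) : Prop :=
  norm_compact (norm_closure S).

Definition norm_bounded (S : (nat -> K) -> Prop) : Prop :=
  (forall x, S x -> QpN x) /\ exists M : R, forall x, S x -> normle x M.

Definition image (A : (nat -> K) -> (nat -> K)) (S : (nat -> K) -> Prop)
  (y : nat -> K) : Prop := exists x, S x /\ y = A x.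

(* A in B(Q_p(N)): a tau-continuous Z_p-linear self-map of Q_p(N)
   (values of A outside Q_p(N) are irrelevant) *)
Definition is_op (A : (nat -> K) -> (nat -> K)) : Prop :=
  [/\ forall x, QpN x -> QpN (A x),
      forall x y, QpN x -> QpN y -> A (fun i => x i + y i) = (fun i => A x i + A y i),
      forall a x, Zp a -> QpN x -> A (fun i => a * x i) = (fun i => a * A x i)
    & forall U, tau_open U -> tau_open (fun x => QpN x /\ U (A x))].

Definition compact_op (A : (nat -> K) -> (nat -> K)) : Prop :=
  forall S, norm_bounded S -> rel_tau_compact (image A S).

Definition norm_compact_op (A : (nat -> K) -> (nat -> K)) : Prop :=
  forall S, norm_bounded S -> rel_norm_compact (image A S).

Definition Kop (A : (nat -> K) -> (nat -> K)) : Prop := is_op A /\ compact_op A.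

Definition delta (j : nat) : nat -> K := fun i => if i == j then 1 else 0.

Definition entry (A : (nat -> K) -> (nat -> K)) (i j : nat) : K := A (delta j) i.

Definition entries_to_zero (A : (nat -> K) -> (nat -> K)) : Prop :=
  forall e : R, 0 < e -> exists s : seq (nat * nat),
    forall i j, e < abs (entry A i j) -> (i, j) \in s.

(* <x1, y1> = <x2, y2>, computed in Q_p/Z_p (iota is injective) *)
Definition pair_eq (x1 y1 x2 y2 : nat -> K) : Prop :=
  exists N : nat,
    (forall i, (N <= i)%N -> Zp (x1 i * y1 i) /\ Zp (x2 i * y2 i)) /\
    Zp ((\sum_(i < N) x1 i * y1 i) - (\sum_(i < N) x2 i * y2 i)).

Definition is_adjoint (A B : (nat -> K) -> (nat -> K)) : Prop :=
  forall xi eta, QpN xi -> QpN eta -> pair_eq (A xi) eta xi (B eta).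

End QpN.

(* An operator A is determined by its matrix: tau-continuity gives
   (A x)(i) = sum_j x_j A_ij and makes every row tend to 0, while A (p^-k delta_j)
   lying in Q_p(N) makes every column tend to 0.  A tau- or norm-compact set lies in
   some X_N = {x | |x_i| <= 1 for i >= N}; applied to the image of the bounded family
   p^k delta_j this gives |A_ij| <= p^-k below row N, hence A_ij -> 0.  Conversely, if
   A_ij -> 0 then A maps a bounded set into a box {y | |y_i| <= r_i} with r_i -> 0,
   and such boxes are compact in both topologies: Z_p is covered by finitely many
   balls of radius p^-L (Q is dense), and by completeness a nested sequence of pieces
   without finite subcover shrinks to a point.  The ideal properties then hold
   entrywise (for T A because T is bounded on the unit ball).  Any adjoint has the
   transposed matrix, and the transpose of a matrix with A_ij -> 0 defines an adjoint
   since the series sum_i eta_i A_ij converge. *)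

From Pilot Require Import Defs.
From HB Require Import structures.
From mathcomp Require Import all_boot all_order all_algebra.
From mathcomp Require Import reals.
From mathcomp Require Import ring lra zify.
From Stdlib Require List.
Set Implicit Arguments. Unset Strict Implicit. Unset Printing Implicit Defensive.
Import Order.TTheory GRing.Theory Num.Theory.
Local Open Scope ring_scope.

Section PadicSequences.
Variables (p : nat) (R : realType) (K : fieldType) (abs : K -> R).
Hypothesis abs_ge0 : forall x, 0 <= abs x.
Hypothesis abs_eq0 : forall x, abs x = 0 <-> x = 0.
Hypothesis abs_mul : forall x y, abs (x * y) = abs x * abs y.
Hypothesis abs_ultra : forall x y, abs (x + y) <= Num.max (abs x) (abs y).

(** * Ultrametric absolute values and p-adic nets *)

Lemma abs0 : abs 0 = 0. Proof. exact/abs_eq0. Qed.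

Lemma abs_le0 x : abs x <= 0 -> x = 0.
Proof. by move=> h; apply/abs_eq0/eqP; rewrite eq_le h abs_ge0. Qed.

Lemma abs1 : abs 1 = 1.
Proof.
have h := abs_mul 1 1; rewrite mulr1 in h.
have n0 : abs 1 != 0 by apply/eqP => /abs_eq0 /eqP; rewrite oner_eq0.
by apply: (mulfI n0); rewrite mulr1 -h.
Qed.

Lemma absN x : abs (- x) = abs x.
Proof.
suff absN1 : abs (-1) = 1 by rewrite -mulN1r abs_mul absN1 mul1r.
have h := abs_mul (-1) (-1); rewrite mulrNN mulr1 abs1 in h.
have : (abs (-1) - 1) * (abs (-1) + 1) = 0 by rewrite -subr_sqr expr1n expr2 -h subrr.
move/eqP; rewrite mulf_eq0 => /orP [/eqP|/eqP] e; first by apply/eqP; rewrite -subr_eq0 e.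
have : 0 < abs (-1) + 1 by apply: ltr_wpDl.
by rewrite e ltxx.
Qed.

Lemma absB x y : abs (x - y) = abs (y - x).
Proof. by rewrite -absN opprB. Qed.

Lemma abs_add_le x y b : abs x <= b -> abs y <= b -> abs (x + y) <= b.
Proof. by move=> hx hy; apply: le_trans (abs_ultra x y) _; rewrite ge_max hx hy. Qed.

Lemma abs_add_lt x y b : abs x < b -> abs y < b -> abs (x + y) < b.
Proof. by move=> hx hy; apply: le_lt_trans (abs_ultra x y) _; rewrite gt_max hx hy. Qed.

Lemma abs_sub_le x y b : abs x <= b -> abs y <= b -> abs (x - y) <= b.
Proof. by move=> hx hy; apply: abs_add_le; rewrite ?absN. Qed.

Lemma abs_sub_lt x y b : abs x < b -> abs y < b -> abs (x - y) < b.
Proof. by move=> hx hy; apply: abs_add_lt; rewrite ?absN. Qed.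

Lemma abs_sum_le n (f : nat -> K) b : 0 <= b ->
  (forall j, (j < n)%N -> abs (f j) <= b) -> abs (\sum_(j < n) f j) <= b.
Proof.
move=> b0; elim: n => [|n IH] h; first by rewrite big_ord0 abs0.
rewrite big_ord_recr /=; apply: abs_add_le; last exact: h.
by apply: IH => j hj; apply/h/ltnW.
Qed.

Lemma abs_sum_lt n (f : nat -> K) b : 0 < b ->
  (forall j, (j < n)%N -> abs (f j) < b) -> abs (\sum_(j < n) f j) < b.
Proof.
move=> b0; elim: n => [|n IH] h; first by rewrite big_ord0 abs0.
rewrite big_ord_recr /=; apply: abs_add_lt; last exact: h.
by apply: IH => j hj; apply/h/ltnW.
Qed.

Lemma abs_inv x : abs (x^-1) = (abs x)^-1.
Proof.
have [->|x0] := eqVneq x 0; first by rewrite invr0 abs0 invr0.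
have ax0 : abs x != 0 by apply/eqP => /abs_eq0; apply/eqP.
have h : abs x * abs x^-1 = 1 by rewrite -abs_mul mulfV // abs1.
by rewrite -[RHS]mulr1 -h mulrA mulVf // mul1r.
Qed.

Lemma abs_div x y : abs (x / y) = abs x / abs y.
Proof. by rewrite abs_mul abs_inv. Qed.

Lemma absX x n : abs (x ^+ n) = abs x ^+ n.
Proof. by elim: n => [|n IH]; rewrite ?expr0 ?abs1 // !exprS abs_mul IH. Qed.

Lemma abs_natr_le1 n : abs (n%:R : K) <= 1.
Proof.
elim: n => [|n IH]; first by rewrite abs0.
by rewrite -addn1 natrD; apply: abs_add_le; rewrite ?abs1.
Qed.

Lemma abs_intr_abs (z : int) : abs (z%:~R : K) = abs ((`|z|%N)%:R).
Proof. by case: z => k //=; rewrite NegzE mulrNz absN. Qed.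

Lemma le_of_le_max_eps (a b : R) : 0 <= b ->
  (forall e, 0 < e -> a <= Num.max e b) -> a <= b.
Proof.
move=> b0 h; rewrite leNgt; apply/negP => ab.
have e0 : 0 < (a - b) / 2 by apply: divr_gt0 => //; rewrite subr_gt0.
by have := h _ e0; rewrite le_max => /orP [h1|h1]; lra.
Qed.

Hypothesis p_prime : prime p.
Hypothesis abs_p : abs p%:R = (p%:R)^-1.

Lemma pR_gt1 : 1 < (p%:R : R). Proof. by rewrite ltr1n prime_gt1. Qed.
Lemma pR_gt0 : 0 < (p%:R : R). Proof. exact: lt_trans ltr01 pR_gt1. Qed.
Lemma pRX_gt0 k : 0 < (p%:R : R) ^+ k. Proof. exact/exprn_gt0/pR_gt0. Qed.

Definition rho N : R := (p%:R : R)^-1 ^+ N.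

Lemma rhoE N : rho N = ((p%:R : R) ^+ N)^-1. Proof. by rewrite /rho exprVn. Qed.

Lemma rho_gt0 N : 0 < rho N. Proof. by rewrite rhoE invr_gt0 pRX_gt0. Qed.

Lemma rho_le1 N : rho N <= 1.
Proof. by apply: exprn_ile1; rewrite ?invr_ge0 ?ler0n // invf_le1 ?pR_gt0 // ltW // pR_gt1. Qed.

Lemma rho_mono N M : (N <= M)%N -> rho M <= rho N.
Proof.
move/subnK => <-; elim: (M - N)%N => [|k IH]; first by rewrite add0n.
apply: le_trans IH; rewrite addSn /rho exprS ler_piMl ?exprn_ge0 ?invr_ge0 ?ler0n //.
by rewrite invf_le1 ?pR_gt0 // ltW // pR_gt1.
Qed.

Lemma rhoD N M : rho (N + M) * (p%:R) ^+ M = rho N.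
Proof. by rewrite /rho exprD -mulrA -exprMn mulVf ?expr1n ?mulr1 // gt_eqF ?pR_gt0. Qed.

Lemma pRX_gt (x : R) : exists m, x < (p%:R) ^+ m.
Proof.
exists (Num.Def.archi_bound x); apply: lt_le_trans (upper_nthrootP (leqnn _)) _.
by apply: lerXn2r; rewrite ?nnegrE ?ler0n // ler_nat prime_gt1.
Qed.

Lemma rho_small (e : R) n : 0 < e -> exists l, (n <= l)%N /\ rho l < e.
Proof.
move=> e0; have [k hk] := pRX_gt e^-1.
exists (maxn n k); split; first exact: leq_maxl.
apply: le_lt_trans (rho_mono (leq_maxr n k)) _.
by rewrite rhoE -[e]invrK ltf_pV2 ?posrE ?invr_gt0 ?pRX_gt0.
Qed.

Lemma abs_natr_coprime m : ~~ (p %| m)%N -> abs (m%:R : K) = 1.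
Proof.
move=> hm; have m0 : (0 < m)%N by case: m hm => //; rewrite dvdn0.
have : coprime m p by rewrite coprime_sym prime_coprime.
case/(coprimeP _ m0) => [[u v]] /= huv.
have e : (u * m = v * p + 1)%N.
  by move: huv; set a := (u * m)%N; set b := (v * p)%N; lia.
have h1 : (1 : K) = u%:R * m%:R - v%:R * p%:R by rewrite -!natrM e natrD addrAC subrr add0r.
have hvp : abs (v%:R * p%:R : K) < 1.
  rewrite abs_mul abs_p; apply: le_lt_trans (_ : 1 * (p%:R)^-1 < 1).
    by apply: ler_wpM2r; rewrite ?abs_natr_le1 ?invr_ge0 ?ler0n.
  by rewrite mul1r invf_lt1 ?pR_gt0 ?pR_gt1.
have hum : 1 <= abs (u%:R * m%:R : K).
  by rewrite leNgt; apply/negP => hlt; have := abs_sub_lt hlt hvp; rewrite -h1 abs1 ltxx.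
apply/eqP; rewrite eq_le abs_natr_le1 (le_trans hum) // abs_mul.
by apply: ler_piMl; rewrite ?abs_ge0 ?abs_natr_le1.
Qed.

Lemma abs_natr_gt0 m : (0 < m)%N -> 0 < abs (m%:R : K).
Proof.
elim: m {-2}m (leqnn m) => [|n IH] m hm m0; first by move: hm m0; case: m.
have [pm|pm] := boolP (p %| m)%N; last by rewrite abs_natr_coprime // ltr01.
case/dvdnP: pm => k mk.
have k0 : (0 < k)%N by move: m0; rewrite mk muln_gt0 => /andP [].
have kn : (k <= n)%N.
  have : (k < m)%N by rewrite mk -[X in (X < _)%N]muln1 ltn_pmul2l // prime_gt1.
  by move=> h; rewrite -ltnS; apply: leq_trans h hm.
by rewrite mk natrM abs_mul abs_p mulr_gt0 ?IH // invr_gt0 pR_gt0.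
Qed.

Lemma natr_neq0 m : (0 < m)%N -> (m%:R : K) != 0.
Proof. by move/abs_natr_gt0; apply: contraTneq => ->; rewrite abs0 ltxx. Qed.

Lemma pK_neq0 : (p%:R : K) != 0. Proof. exact/natr_neq0/prime_gt0. Qed.

Lemma abs_pinvX k : abs ((p%:R : K)^-1 ^+ k) = (p%:R) ^+ k.
Proof. by rewrite absX abs_inv abs_p invrK. Qed.

Lemma abs_natrX_le (x N : nat) : abs ((x * p ^ N)%:R : K) <= rho N.
Proof.
rewrite natrM natrX abs_mul absX abs_p.
by apply: ler_piMl; rewrite ?exprn_ge0 ?invr_ge0 ?ler0n ?abs_natr_le1.
Qed.

Lemma ratr_abs_denq (q : rat) : ratr q = (numq q)%:~R / (`|denq q|%N)%:R :> K.
Proof.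
have dq : denq q = (`|denq q|%N)%:Z by rewrite gtz0_abs ?denq_gt0.
by rewrite /ratr {1}dq.
Qed.

Lemma abs_ratr_le1_denq (q : rat) : abs (ratr q : K) <= 1 -> ~~ (p %| `|denq q|)%N.
Proof.
move=> hq; apply/negP => pd.
have pn : ~~ (p %| `|numq q|)%N.
  apply/negP => pn; have := coprime_num_den q; rewrite /coprime => /eqP g1.
  have : (p %| gcdn `|numq q| `|denq q|)%N by rewrite dvdn_gcd pn pd.
  by rewrite g1 dvdn1 => /eqP p1; move: (prime_gt1 p_prime); rewrite p1.
have [k dk] := dvdnP pd.
have ad : abs ((`|denq q|%N)%:R : K) <= (p%:R)^-1.
  by have := abs_natrX_le k 1; rewrite expn1 /rho expr1 -dk.
move: hq; rewrite ratr_abs_denq abs_div abs_intr_abs abs_natr_coprime // mul1r.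
rewrite invf_le1 ?abs_natr_gt0 ?absz_gt0 ?denq_neq0 // => h1.
by have := le_trans h1 ad; rewrite invf_ge1 ?pR_gt0 // leNgt pR_gt1.
Qed.

(* A p-adic unit d is invertible modulo p^N: with u d = v p^N + 1, the integer
   numq q * u approximates q = numq q / d. *)
Lemma abs_ratr_sub_int_le (q : rat) N : abs (ratr q : K) <= 1 ->
  exists b : int, abs (ratr q - b%:~R : K) <= rho N.
Proof.
move=> hq; set d := `|denq q|%N.
have pd := abs_ratr_le1_denq hq.
have ad1 : abs (d%:R : K) = 1 by apply: abs_natr_coprime.
have dpos : (0 < d)%N by rewrite absz_gt0 denq_neq0.
have d0 : (d%:R : K) != 0 by apply: natr_neq0.
have : coprime d (p ^ N) by apply: coprimeXr; rewrite coprime_sym prime_coprime.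
case/(coprimeP _ dpos) => [[u v]] /= huv.
have e : (u * d = v * p ^ N + 1)%N.
  by move: huv; set a := (u * d)%N; set b := (v * p ^ N)%N; lia.
have eK : (u%:R * d%:R : K) = v%:R * (p ^ N)%N%:R + 1 by rewrite -!natrM e natrD.
exists (numq q * u%:Z).
have -> : (ratr q : K) - (numq q * u%:Z)%:~R = - ((numq q)%:~R * (v%:R * (p ^ N)%N%:R)) / d%:R.
  rewrite ratr_abs_denq intrM /=.
  have -> : ((numq q)%:~R : K) * u%:R = (numq q)%:~R * (u%:R * d%:R) / d%:R by field.
  by rewrite eK; field.
rewrite abs_div ad1 divr1 absN abs_mul abs_intr_abs -natrM.
apply: le_trans (_ : 1 * abs ((v * p ^ N)%N%:R : K) <= _).
  by apply: ler_wpM2r; rewrite ?abs_ge0 ?abs_natr_le1.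
by rewrite mul1r abs_natrX_le.
Qed.

Lemma abs_int_sub_nat_le (b : int) N :
  exists a, (a < p ^ N)%N /\ abs (b%:~R - a%:R : K) <= rho N.
Proof.
set P := (p ^ N)%N.
have P0 : (0 < P)%N by rewrite expn_gt0 prime_gt0.
have hm0 : (0 <= (b %% P%:Z)%Z) by apply: modz_ge0; rewrite eqz_nat -lt0n.
exists `|(b %% P%:Z)%Z|%N; split.
  by rewrite -ltz_nat gez0_abs // ltz_pmod // ltz_nat.
have -> : ((`|(b %% P%:Z)%Z|%N)%:R : K) = ((b %% P%:Z)%Z)%:~R.
  by rewrite -[in RHS](gez0_abs hm0).
have -> : (b%:~R : K) - ((b %% P%:Z)%Z)%:~R = ((b %/ P%:Z)%Z)%:~R * P%:R.
  by rewrite {1}(divz_eq b P%:Z) intrD intrM addrK.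
by rewrite abs_mul abs_intr_abs -abs_mul -natrM abs_natrX_le.
Qed.

Hypothesis rat_dense : forall x (e : R), 0 < e -> exists q : rat, abs (x - ratr q) < e.

Lemma Zp_net z N : abs z <= 1 -> exists a, (a < p ^ N)%N /\ abs (z - a%:R) <= rho N.
Proof.
move=> hz; have [q hq] := rat_dense z (rho_gt0 N).
have hq1 : abs (ratr q : K) <= 1.
  have -> : (ratr q : K) = z - (z - ratr q) by rewrite opprB addrC subrK.
  by apply: abs_sub_le => //; apply: ltW (lt_le_trans hq (rho_le1 N)).
have [b hb] := abs_ratr_sub_int_le N hq1.
have [a [ha hab]] := abs_int_sub_nat_le b N.
exists a; split => //.
have -> : z - a%:R = (z - ratr q) + ((ratr q - b%:~R) + (b%:~R - a%:R)) by ring.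
by apply: abs_add_le; [exact: ltW | exact: abs_add_le].
Qed.

Lemma Qp_ball_net y m L : abs y <= (p%:R) ^+ m ->
  exists a : nat, (a < p ^ (L + m))%N /\ abs (y - a%:R * (p%:R : K)^-1 ^+ m) <= rho L.
Proof.
move=> hy.
have hz : abs (y * (p%:R) ^+ m) <= 1.
  by rewrite abs_mul absX abs_p exprVn ler_pdivrMr ?pRX_gt0 // mul1r.
have [a [ha1 ha2]] := Zp_net (L + m) hz.
exists a; split => //.
have -> : y - a%:R * (p%:R : K)^-1 ^+ m = (y * (p%:R) ^+ m - a%:R) * (p%:R)^-1 ^+ m.
  by rewrite mulrBl -mulrA -exprMn mulfV ?pK_neq0 // expr1n mulr1.
rewrite abs_mul abs_pinvX -(rhoD L m).
by apply: ler_wpM2r => //; apply/ltW/pRX_gt0.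
Qed.

(** * Compactness of boxes *)

Hypothesis abs_complete : forall u : nat -> K,
  (forall e : R, 0 < e -> exists N, forall m n, (N <= m)%N -> (N <= n)%N ->
     abs (u m - u n) < e) ->
  exists l, forall e : R, 0 < e -> exists N, forall n, (N <= n)%N -> abs (u n - l) < e.

Definition box (r : nat -> R) (y : nat -> K) := forall i, abs (y i) <= r i.

Definition close n (e : R) (x y : nat -> K) := forall i, (i < n)%N -> abs (y i - x i) < e.

Lemma nested_limit (S : nat -> (nat -> K) -> Prop) (c : nat -> nat -> K) :
  (forall l, exists y, S l y) -> (forall l k y, (l <= k)%N -> S k y -> S l y) ->
  (forall l y i, S l y -> (i < l)%N -> abs (y i - c l i) <= rho l) ->
  exists z, forall l y i, S l y -> (i < l)%N -> abs (y i - z i) <= rho l.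
Proof.
move=> Sne Sdec Sc; have [x Sx] := boolp.choice Sne.
have cauchy l j k i : (l <= j)%N -> (l <= k)%N -> (i < l)%N -> abs (x j i - x k i) <= rho l.
  move=> hj hk hi.
  have -> : x j i - x k i = (x j i - c l i) - (x k i - c l i) by ring.
  by apply: abs_sub_le; apply: Sc hi; [apply: Sdec hj _ | apply: Sdec hk _].
have lim_i i : exists zi, forall e, 0 < e -> exists N, forall n, (N <= n)%N ->
    abs (x n i - zi) < e.
  apply: abs_complete => e e0; have [l [hl hle]] := rho_small i.+1 e0.
  by exists l => j k hj hk; apply: le_lt_trans hle; apply: cauchy.
have [z hz] := boolp.choice lim_i.
have zc l i : (i < l)%N -> abs (z i - c l i) <= rho l.
  move=> hi; apply: le_of_le_max_eps => [|e e0]; first exact/ltW/rho_gt0.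
  have [N hN] := hz i e e0.
  have -> : z i - c l i = - (x (maxn N l) i - z i) + (x (maxn N l) i - c l i) by ring.
  apply: le_trans (abs_ultra _ _) _; rewrite absN ge_max !le_max.
  rewrite (ltW (hN _ (leq_maxl _ _))) (Sc l _ _ (Sdec _ _ _ (leq_maxr _ _) (Sx _)) hi).
  by rewrite orbT.
exists z => l y i Sy hi.
have -> : y i - z i = (y i - c l i) - (z i - c l i) by ring.
by apply: abs_sub_le; [apply: Sc | apply: zc].
Qed.

Section FiniteCover.
Variables (I : Type) (U : I -> (nat -> K) -> Prop).

Definition finitely_covered (S : (nat -> K) -> Prop) :=
  exists s : list I, forall x, S x -> exists i, List.In i s /\ U i x.

Lemma uncovered_piece (S : (nat -> K) -> Prop) (Q : nat -> (nat -> K) -> Prop) B :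
  ~ finitely_covered S -> (forall y, S y -> exists a, (a < B)%N /\ Q a y) ->
  exists a, ~ finitely_covered (fun y => S y /\ Q a y).
Proof.
move=> nS hS; apply: boolp.contrapT => hn.
have hall a : finitely_covered (fun y => S y /\ Q a y).
  by apply: boolp.contrapT => h; apply: hn; exists a.
suff /(_ B) [s hs] : forall B',
    finitely_covered (fun y => S y /\ exists a, (a < B')%N /\ Q a y).
  by apply: nS; exists s => x Sx; apply: hs; split => //; apply: hS.
elim=> [|B' [s1 h1]]; first by exists nil => x [_ [a []]].
have [s2 h2] := hall B'.
exists (s1 ++ s2)%list => x [Sx [a [ha Qa]]].
have [ab|ab] := boolP (a < B')%N.
  have [i [hi Ui]] := h1 x (conj Sx (ex_intro _ a (conj ab Qa))).
  by exists i; split => //; apply: List.in_or_app; left.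
have eaB : a = B' by apply/eqP; rewrite eqn_leq -ltnS ha leqNgt ab.
rewrite eaB in Qa; have [i [hi Ui]] := h2 x (conj Sx Qa).
by exists i; split => //; apply: List.in_or_app; right.
Qed.

Variables (r : nat -> R) (m : nat).
Hypothesis r_le : forall i, r i <= (p%:R) ^+ m.

(* The coordinate k of a point of the box lies in one of p^(L+m) balls of
   radius rho L, so one of them leaves an uncovered piece. *)
Lemma uncovered_refine (S : (nat -> K) -> Prop) L k :
  ~ finitely_covered S -> (forall y, S y -> box r y) ->
  exists c : nat -> K, ~ finitely_covered
    (fun y => S y /\ forall i, (i < k)%N -> abs (y i - c i) <= rho L).
Proof.
move=> nS hS; elim: k => [|k [c hc]].
  exists (fun _ => 0) => - [s hs]; apply: nS; exists s => y Sy.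
  by apply: hs; split => // i; rewrite ltn0.
have [|a ha] := @uncovered_piece _
  (fun a y => abs (y k - a%:R * (p%:R : K)^-1 ^+ m) <= rho L) (p ^ (L + m)) hc.
  by move=> y [Sy _]; apply: Qp_ball_net; apply: le_trans (hS _ Sy k) (r_le k).
exists (fun i => if i == k then a%:R * (p%:R : K)^-1 ^+ m else c i) => - [s hs].
apply: ha; exists s => y [[Sy hy] hk]; apply: hs; split => // i.
rewrite ltnS leq_eqVlt => /orP [/eqP ->|hi]; first by rewrite eqxx.
by rewrite (ltn_eqF hi); apply: hy.
Qed.

Lemma uncovered_nested (C : (nat -> K) -> Prop) :
  ~ finitely_covered C -> (forall y, C y -> box r y) ->
  exists (S : nat -> (nat -> K) -> Prop) (c : nat -> nat -> K),
  [/\ forall l, ~ finitely_covered (S l), forall l y, S l y -> C y,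
      forall l k y, (l <= k)%N -> S k y -> S l y
    & forall l y i, S l y -> (i < l)%N -> abs (y i - c l i) <= rho l].
Proof.
move=> nC hC.
have hex (lS : nat * ((nat -> K) -> Prop)) : exists c : nat -> K,
    ~ finitely_covered lS.2 -> (forall y, lS.2 y -> box r y) -> ~ finitely_covered
      (fun y => lS.2 y /\ forall i, (i < lS.1)%N -> abs (y i - c i) <= rho lS.1).
  have [[nS bS]|hn] := boolp.pselect (~ finitely_covered lS.2 /\ forall y, lS.2 y -> box r y).
    by have [c hc] := uncovered_refine lS.1 lS.1 nS bS; exists c.
  by exists (fun _ => 0) => h1 h2; case: hn.
have [F hF] := boolp.choice hex.
pose fix S l := match l with
  | 0 => C
  | l'.+1 => fun y => S l' y /\ forall i, (i < l'.+1)%N ->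
       abs (y i - F (l'.+1, S l') i) <= rho l'.+1 end.
have SC l y : S l y -> C y by elim: l y => [|l IH] y //= [/IH].
exists S, (fun l => if l is l'.+1 then F (l, S l') else fun _ => 0); split.
- elim=> [|l IH] //=; apply: (hF (l.+1, S l)) => //= y /SC; exact: hC.
- exact: SC.
- move=> l k y /subnK <-; elim: (k - l)%N => [|d IH] //=.
  by move=> h; apply: IH; exact: h.1.
- by case=> [|l] y i //= [_ h]; apply: h.
Qed.

Variable (C : (nat -> K) -> Prop).
Hypothesis C_box : forall y, C y -> box r y.
Hypothesis C_closed : forall z, box r z ->
  (forall n e, 0 < e -> exists y, C y /\ close n e z y) -> C z.
Hypothesis U_open : forall i x, C x -> U i x ->
  exists n e, 0 < e /\ forall y, C y -> close n e x y -> U i y.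
Hypothesis U_cover : forall x, C x -> exists i, U i x.

(* If not, a nested sequence of uncovered pieces shrinks to a point z of C,
   and the member of the cover containing z covers the small pieces. *)
Lemma box_compact : finitely_covered C.
Proof.
apply: boolp.contrapT => nC.
have [S [c [Snc SC Sdec Sc]]] := uncovered_nested nC C_box.
have Sne l : exists y, S l y.
  by apply: boolp.contrapT => h; apply: (Snc l); exists nil => y Sy; case: h; exists y.
have [z hz] := nested_limit Sne Sdec Sc.
have near_z n e : 0 < e -> exists l, forall y, S l y -> close n e z y.
  move=> e0; have [l [hl hle]] := rho_small n e0.
  by exists l => y Sy i hi; apply: le_lt_trans hle; apply: hz (leq_trans hi hl).
have zC : C z.
  apply: C_closed => [i|n e e0]; last first.
    by have [l hl] := near_z n e e0; have [y Sy] := Sne l; exists y; split; [apply: SC Sy | apply: hl].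
  have [y0 Sy0] := Sne 0%N.
  apply: le_of_le_max_eps => [|e e0]; first exact: le_trans (abs_ge0 _) (C_box (SC _ _ Sy0) i).
  have [l hl] := near_z i.+1 e e0; have [y Sy] := Sne l.
  have -> : z i = y i - (y i - z i) by ring.
  apply: le_trans (abs_ultra _ _) _; rewrite absN ge_max !le_max (ltW (hl y Sy i (ltnSn i))).
  by rewrite (C_box (SC _ _ Sy) i) orbT.
have [i0 Ui0] := U_cover zC.
have [n [e [e0 hne]]] := U_open zC Ui0.
have [l hl] := near_z n e e0.
apply: (Snc l); exists [:: i0] => y Sy; exists i0; split; first by left.
by apply: hne; [apply: SC Sy | apply: hl].
Qed.

End FiniteCover.

(** * The topologies on Q_p(N) *)

Lemma zp0 : Defs.Zp abs 0. Proof. by rewrite /Defs.Zp abs0 ler01. Qed.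
Lemma zp1 : Defs.Zp abs 1. Proof. by rewrite /Defs.Zp abs1. Qed.
Lemma zpD x y : Defs.Zp abs x -> Defs.Zp abs y -> Defs.Zp abs (x + y).
Proof. exact: abs_add_le. Qed.
Lemma zpB x y : Defs.Zp abs x -> Defs.Zp abs y -> Defs.Zp abs (x - y).
Proof. exact: abs_sub_le. Qed.
Lemma zpN x : Defs.Zp abs x -> Defs.Zp abs (- x).
Proof. by rewrite /Defs.Zp absN. Qed.
Lemma zpM x y : Defs.Zp abs x -> Defs.Zp abs y -> Defs.Zp abs (x * y).
Proof.
rewrite /Defs.Zp abs_mul => hx hy; apply: le_trans (_ : abs x * 1 <= 1).
  by apply: ler_wpM2l; rewrite ?abs_ge0.
by rewrite mulr1.
Qed.

Definition XN N (y : nat -> K) := forall j, (N <= j)%N -> Defs.Zp abs (y j).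

Lemma XN_mono N N' y : (N <= N')%N -> XN N y -> XN N' y.
Proof. by move=> hN h j hj; apply: h; apply: leq_trans hN hj. Qed.

Lemma XP_iota N y : XP abs (iota 0 N) y <-> XN N y.
Proof.
by split=> h j hj; apply: h; move: hj; rewrite mem_iota add0n /= -leqNgt.
Qed.

Lemma seq_bound (P : seq nat) : exists n, forall i, i \in P -> (i < n)%N.
Proof.
elim: P => [|a P [n hn]]; first by exists 0%N.
exists (maxn a.+1 n) => i; rewrite inE => /orP [/eqP ->|/hn h].
  by rewrite leq_max leqnn.
by rewrite leq_max h orbT.
Qed.

Lemma list_bound (s : list nat) : exists N, forall i, List.In i s -> (i <= N)%N.
Proof.
elim: s => [|a s [N hN]]; first by exists 0%N.
exists (maxn a N) => i [<-|/hN h]; first exact: leq_maxl.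
by apply: leq_trans h (leq_maxr _ _).
Qed.

Lemma XP_XN P y : XP abs P y -> exists N, XN N y /\ forall i, i \in P -> (i < N)%N.
Proof.
have [n hn] := seq_bound P => h; exists n; split => // j hj; apply: h.
by apply/negP => /hn; rewrite ltnNge hj.
Qed.

Lemma XP_QpN P y : XP abs P y -> QpN abs y.
Proof. by move=> /XP_XN [N [hN _]]; exists N. Qed.

Lemma QpND x y : QpN abs x -> QpN abs y -> QpN abs (fun i => x i + y i).
Proof.
move=> [N hN] [M hM]; exists (maxn N M) => i hi; apply: zpD.
  by apply: hN; apply: leq_trans hi; apply: leq_maxl.
by apply: hM; apply: leq_trans hi; apply: leq_maxr.
Qed.

Lemma QpNN x : QpN abs x -> QpN abs (fun i => - x i).
Proof. by move=> [N hN]; exists N => i /hN; apply: zpN. Qed.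

Lemma QpNB x y : QpN abs x -> QpN abs y -> QpN abs (fun i => x i - y i).
Proof. by move=> hx hy; apply: QpND => //; apply: QpNN. Qed.

Lemma QpNZ a x : Defs.Zp abs a -> QpN abs x -> QpN abs (fun i => a * x i).
Proof. by move=> ha [N hN]; exists N => i /hN; apply: zpM. Qed.

Lemma QpN_finite_support x N : (forall i, (N <= i)%N -> x i = 0) -> QpN abs x.
Proof. by move=> h; exists N => i /h ->; apply: zp0. Qed.

Lemma QpN0 : QpN abs (fun _ => 0).
Proof. exact: (@QpN_finite_support _ 0%N). Qed.

Lemma QpN_scale_delta c j : QpN abs (fun i => c * delta K j i).
Proof.
by apply: (@QpN_finite_support _ j.+1) => i hi; rewrite /delta (gtn_eqF hi) mulr0.
Qed.

Lemma QpN_delta j : QpN abs (delta K j).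
Proof. by apply: (@QpN_finite_support _ j.+1) => i hi; rewrite /delta (gtn_eqF hi). Qed.

Lemma QpN_normle x : QpN abs x -> exists M, 1 <= M /\ normle abs x M.
Proof.
move=> [N hN].
have [M [M1 hM]] : exists M, 1 <= M /\ forall i, (i < N)%N -> abs (x i) <= M.
  elim: N {hN} => [|N [M [M1 hM]]]; first by exists 1.
  exists (Num.max M (abs (x N))); split; first by rewrite le_max M1.
  move=> i; rewrite ltnS leq_eqVlt => /orP [/eqP ->|hi]; first by rewrite le_max lexx orbT.
  by rewrite le_max hM.
exists M; split => // i; have [iN|iN] := ltnP i N; first exact: hM.
by apply: le_trans M1; apply: hN.
Qed.

Lemma tau_open_ext (U V : (nat -> K) -> Prop) :
  (forall x, QpN abs x -> (U x <-> V x)) -> (forall x, V x -> QpN abs x) ->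
  tau_open abs U -> tau_open abs V.
Proof.
move=> e hV [hU1 hU2]; split => // P x hx /[dup] Vx /(e _ (hV _ Vx)) Ux.
have [n [d [d0 hd]]] := hU2 P x hx Ux.
exists n, d; split => // y hy cy.
by apply/(e _ (XP_QpN hy)); apply: hd.
Qed.

Lemma tau_open_QpN : tau_open abs (QpN abs).
Proof. by split => // P x hx _; exists 0%N, 1; split => // y hy _; apply: XP_QpN hy. Qed.

Lemma tau_open_XN N : tau_open abs (XN N).
Proof.
split; first by move=> x hx; exists N.
move=> P x hx hNx; have [n hn] := seq_bound P.
exists (maxn n N), 1; split; first exact: ltr01.
move=> y hy cy j hj; have [jP|jP] := boolP (j \in P); last exact: hy.
have jn : (j < maxn n N)%N by apply: leq_trans (hn _ jP) (leq_maxl _ _).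
have -> : y j = (y j - x j) + x j by rewrite subrK.
by apply: abs_add_le; [exact/ltW/cy | exact: hNx].
Qed.

Lemma tau_open_close n e (a : nat -> K) :
  tau_open abs (fun z => QpN abs z /\ close n e a z).
Proof.
split=> [x []//|P x hx [Qx cx]].
case: n cx => [|n] cx.
  by exists 0%N, 1; split=> [|y hy _]; [exact: ltr01 | split=> [|i //]; apply: XP_QpN hy].
exists n.+1, e; split; first exact: le_lt_trans (abs_ge0 _) (cx 0%N erefl).
move=> y hy cy; split; first exact: XP_QpN hy.
move=> i hi; have -> : y i - a i = (y i - x i) + (x i - a i) by rewrite addrA subrK.
by apply: abs_add_lt; [apply: cy | apply: cx].
Qed.

Lemma tau_openI U V : tau_open abs U -> tau_open abs V ->
  tau_open abs (fun x => U x /\ V x).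
Proof.
move=> [hU1 hU2] [hV1 hV2]; split=> [x [/hU1]//|P x hx [Ux Vx]].
have [n1 [e1 [e10 h1]]] := hU2 P x hx Ux.
have [n2 [e2 [e20 h2]]] := hV2 P x hx Vx.
exists (maxn n1 n2), (Num.min e1 e2); split; first by rewrite lt_min e10 e20.
move=> y hy cy; split; [apply: h1 | apply: h2] => // i hi.
  by move: (cy i (leq_trans hi (leq_maxl _ _))); rewrite lt_min => /andP [].
by move: (cy i (leq_trans hi (leq_maxr _ _))); rewrite lt_min => /andP [].
Qed.

Lemma abs_gt_of_near (a b : K) (t : R) : 0 <= t ->
  abs (b - a) < abs a - t -> t < abs b.
Proof.
move=> t0 h; rewrite ltNge; apply/negP => bt.
have g := abs_ge0 (b - a).
have : abs a <= Num.max (abs b) (abs (a - b)).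
  by have := abs_ultra b (a - b); rewrite addrC subrK.
by rewrite le_max absB => /orP [] ?; lra.
Qed.

Lemma tau_open_abs_gt i (t : R) : 0 <= t ->
  tau_open abs (fun y => QpN abs y /\ t < abs (y i)).
Proof.
move=> t0; split=> [x []//|P x hx [Qx tx]].
exists i.+1, (abs (x i) - t); split; first by rewrite subr_gt0.
move=> y hy cy; split; first exact: XP_QpN hy.
exact: abs_gt_of_near (cy i (ltnSn i)).
Qed.

Lemma norm_open_XN N : norm_open abs (XN N).
Proof.
split=> [x hx|x hx]; first by exists N.
exists 1; split=> [|y [Qy [d [d1 hd]]] j hj]; first exact: ltr01.
have -> : y j = (y j - x j) + x j by rewrite subrK.
by apply: abs_add_le; [apply: le_trans (hd j) (ltW d1) | exact: hx].
Qed.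

Lemma norm_open_abs_gt i (t : R) : 0 <= t ->
  norm_open abs (fun y => QpN abs y /\ t < abs (y i)).
Proof.
move=> t0; split=> [x []//|x [Qx tx]].
exists (abs (x i) - t); split; first by rewrite subr_gt0.
move=> y [Qy [d [dl hd]]]; split => //.
exact: abs_gt_of_near (le_lt_trans (hd i) dl).
Qed.

(* A cover by the increasing open sets X_N has a finite subcover. *)
Lemma compact_sub_XN (Opn : ((nat -> K) -> Prop) -> Prop) (C : (nat -> K) -> Prop) :
  (forall U : nat -> (nat -> K) -> Prop, (forall i, Opn (U i)) ->
     (forall x, C x -> exists i, U i x) ->
     exists s : list nat, forall x, C x -> exists i, List.In i s /\ U i x) ->
  (forall x, C x -> QpN abs x) -> (forall N, Opn (XN N)) ->
  exists N, forall x, C x -> XN N x.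
Proof.
move=> hcomp hC hopen; have [s hs] := hcomp XN hopen hC.
have [N hN] := list_bound s; exists N => x /hs [i [/hN hi Ui]].
exact: XN_mono hi Ui.
Qed.

(** * Operators and their matrices *)

Definition trunc n (x : nat -> K) := fun i => if (i < n)%N then x i else 0.
Definition tail n (x : nat -> K) := fun i => if (i < n)%N then 0 else x i.

Section Operator.
Variable A : (nat -> K) -> (nat -> K).
Hypothesis hA : is_op abs A.

Lemma op_QpN x : QpN abs x -> QpN abs (A x).
Proof. by case: hA => h _ _ _; apply: h. Qed.

Lemma opD x y : QpN abs x -> QpN abs y ->
  A (fun i => x i + y i) = (fun i => A x i + A y i).
Proof. by case: hA => _ h _ _; apply: h. Qed.

Lemma opZ a x : Defs.Zp abs a -> QpN abs x -> A (fun i => a * x i) = (fun i => a * A x i).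
Proof. by case: hA => _ _ h _; apply: h. Qed.

Lemma op_cont U : tau_open abs U -> tau_open abs (fun x => QpN abs x /\ U (A x)).
Proof. by case: hA => _ _ _ h; apply: h. Qed.

Lemma op0 : A (fun _ => 0) = (fun _ => 0).
Proof.
have := opZ zp0 QpN0; rewrite (_ : (fun i => 0 * 0) = (fun _ => 0)).
  by move=> ->; apply: boolp.funext => i; rewrite mul0r.
by apply: boolp.funext => i; rewrite mulr0.
Qed.

(* Z_p-linearity extends to Q_p-homogeneity: for |c| > 1 apply it to c^-1 in Z_p. *)
Lemma op_scale c x : QpN abs x -> QpN abs (fun i => c * x i) ->
  A (fun i => c * x i) = (fun i => c * A x i).
Proof.
move=> Qx Qcx; have [hc|hc] := lerP (abs c) 1; first exact: opZ.
have c0 : c != 0 by apply/eqP => c0; move: hc; rewrite c0 abs0 ltr10.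
have hci : Defs.Zp abs c^-1.
  by rewrite /Defs.Zp abs_inv invf_le1 ?ltW // (lt_trans ltr01 hc).
have := opZ hci Qcx.
rewrite (_ : (fun i => c^-1 * (c * x i)) = x); last first.
  by apply: boolp.funext => i; rewrite mulrA mulVf // mul1r.
by move=> e; apply: boolp.funext => i; rewrite e mulrA mulfV // mul1r.
Qed.

Lemma op_scale_delta c j : A (fun i => c * delta K j i) = (fun i => c * entry A i j).
Proof. by rewrite op_scale //; [apply: QpN_delta | apply: QpN_scale_delta]. Qed.

Lemma QpN_trunc n x : QpN abs (trunc n x).
Proof. by apply: (@QpN_finite_support _ n) => i hi; rewrite /trunc ltnNge hi. Qed.

Lemma op_trunc n x i : A (trunc n x) i = \sum_(j < n) x j * entry A i j.
Proof.
elim: n => [|n IH].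
  have -> : trunc 0 x = (fun _ => 0) by apply: boolp.funext => j; rewrite /trunc.
  by rewrite big_ord0 op0.
rewrite big_ord_recr /= -IH.
have -> : trunc n.+1 x = fun j => trunc n x j + x n * delta K n j.
  apply: boolp.funext => j; rewrite /trunc /delta ltnS leq_eqVlt.
  have [->|jn] := eqVneq j n; first by rewrite ltnn mulr1 add0r.
  by rewrite /= mulr0 addr0.
by rewrite opD ?op_scale_delta //; [apply: QpN_trunc | apply: QpN_scale_delta].
Qed.

Lemma op_trunc_tail n x i : QpN abs x -> A x i = A (trunc n x) i + A (tail n x) i.
Proof.
move=> [N hN].
have Qt : QpN abs (tail n x).
  by exists N => j hj; rewrite /tail; case: ifP => _; [exact: zp0 | exact: hN].
have ex : (fun j => trunc n x j + tail n x j) = x.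
  by apply: boolp.funext => j; rewrite /trunc /tail; case: ifP; rewrite ?addr0 ?add0r.
by rewrite -{1}ex (opD (QpN_trunc n x) Qt).
Qed.

Lemma op_near0 i e P : 0 < e -> exists n e', 0 < e' /\
  forall y, XP abs P y -> close n e' (fun _ => 0) y -> abs (A y i) < e.
Proof.
move=> e0; have [_ hV] := op_cont (tau_open_close i.+1 e (fun _ => 0)).
have V0 : QpN abs (fun _ => 0 : K) /\
    QpN abs (A (fun _ => 0)) /\ close i.+1 e (fun _ => 0) (A (fun _ => 0)).
  by rewrite op0; do 2 (split; first exact: QpN0); move=> j _; rewrite subrr abs0.
have [n [e' [e'0 h]]] := hV P (fun _ => 0) (fun j _ => zp0) V0.
exists n, e'; split => // y hy cy; have [_ [_ hc]] := h y hy cy.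
by have := hc i (ltnSn i); rewrite subr0.
Qed.

(* The tails [tail n x] tend to 0 in tau. *)
Lemma op_series x i e : QpN abs x -> 0 < e -> exists n0, forall n, (n0 <= n)%N ->
  abs (A x i - \sum_(j < n) x j * entry A i j) < e.
Proof.
move=> Qx e0; have [N hN] := Qx.
have [n1 [e1 [e10 h]]] := op_near0 i (iota 0 N) e0.
exists (maxn n1 N) => n hn; rewrite (op_trunc_tail n i Qx) op_trunc addrC addKr.
apply: h => [|j hj].
  by apply/XP_iota => j hj; rewrite /tail; case: ifP => _; [exact: zp0 | exact: hN].
by rewrite /tail (leq_trans hj (leq_trans (leq_maxl _ _) hn)) subrr abs0.
Qed.

Lemma op_abs_le x i b : QpN abs x -> 0 <= b ->
  (forall j, abs (x j * entry A i j) <= b) -> abs (A x i) <= b.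
Proof.
move=> Qx b0 hb; apply: le_of_le_max_eps => // e e0.
have [n0 hn0] := op_series i Qx e0.
have -> : A x i = (A x i - \sum_(j < n0) x j * entry A i j) + \sum_(j < n0) x j * entry A i j.
  by rewrite subrK.
have hsum : abs (\sum_(j < n0) x j * entry A i j) <= b.
  by apply: (abs_sum_le (f := fun j => x j * entry A i j)) => // j _.
apply: le_trans (abs_ultra _ _) _.
by rewrite ge_max !le_max (ltW (hn0 n0 (leqnn _))) hsum orbT.
Qed.

Lemma entry_row_decay i e : 0 < e ->
  exists J, forall j, (J <= j)%N -> abs (entry A i j) < e.
Proof.
move=> e0; have [n [e' [e'0 h]]] := op_near0 i nil e0.
exists n => j hj; apply: h => [k _|k hk].
  by rewrite /delta; case: eqP => _; [exact: zp1 | exact: zp0].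
by rewrite /delta (ltn_eqF (leq_trans hk hj)) subrr abs0.
Qed.

Lemma entry_col_decay j e : 0 < e ->
  exists N, forall i, (N <= i)%N -> abs (entry A i j) < e.
Proof.
move=> e0; have [k [_ hk]] := rho_small 0 e0.
have [N hN] := op_QpN (QpN_scale_delta ((p%:R)^-1 ^+ k) j).
exists N => i /hN; rewrite op_scale_delta /Defs.Zp abs_mul abs_pinvX => h.
by apply: le_lt_trans hk; rewrite rhoE -[X in _ <= X]mul1r ler_pdivlMr ?pRX_gt0 // mulrC.
Qed.

Lemma op_near P x N n e : XP abs P x -> XN N (A x) -> 0 < e ->
  exists n' e', 0 < e' /\ forall y, XP abs P y -> close n' e' x y ->
    XN N (A y) /\ close n e (A x) (A y).
Proof.
move=> hx hN e0.
have [_ hV] := op_cont (tau_openI (tau_open_XN N) (tau_open_close n e (A x))).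
have Vx : QpN abs x /\ (XN N (A x) /\ (QpN abs (A x) /\ close n e (A x) (A x))).
  have Qx := XP_QpN hx.
  by do 2 split => //; split; [exact: op_QpN | move=> i _; rewrite subrr abs0].
have [n' [e' [e'0 h]]] := hV P x hx Vx.
by exists n', e'; split => // y hy cy; have [_ [h1 [_ h2]]] := h y hy cy.
Qed.

(* The unit ball is tau-compact (a box), and it is covered by the increasing
   tau-open preimages of {y in X_k | |y_i| < k for i < k}. *)
Lemma op_unit_ball_bounded : exists c, 0 < c /\
  forall x, QpN abs x -> normle abs x 1 -> normle abs (A x) c.
Proof.
pose U k x := QpN abs x /\ (XN k (A x) /\ (QpN abs (A x) /\ close k k%:R (fun _ => 0) (A x))).
have Uo k : tau_open abs (U k).
  exact: (op_cont (tau_openI (tau_open_XN k) (tau_open_close k k%:R (fun _ => 0)))).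
have XPnil y : box (fun _ => 1) y -> XP abs nil y by move=> hy j _; apply: hy.
have [s hs] : finitely_covered U (box (fun _ => 1)).
  apply: (@box_compact nat U (fun _ => 1) 0%N).
  - by move=> i; rewrite expr0.
  - by [].
  - by move=> z hz _.
  - move=> i x Cx Ux.
    have [n [e [e0 hn]]] := (Uo i).2 nil x (XPnil x Cx) Ux.
    by exists n, e; split => // y Cy cy; apply: hn => //; apply: XPnil.
  - move=> x Cx.
    have Qax : QpN abs (A x) by apply: op_QpN; exists 0%N => j _; apply: Cx.
    have [N hN] := Qax; have [M [M1 hM]] := QpN_normle Qax.
    have hk0 := archi_boundP (le_trans ler01 M1); set k0 := Num.Def.archi_bound _ in hk0.
    exists (maxn N k0); split; first by exists 0%N => j _; apply: Cx.
    split; first by apply: XN_mono hN; apply: leq_maxl.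
    split => // i _; rewrite subr0; apply: le_lt_trans (hM i) (lt_le_trans hk0 _).
    by rewrite ler_nat leq_maxr.
have [K0 hK0] := list_bound s.
exists (K0%:R + 1); split; first by apply: ltr_wpDl; rewrite ?ler0n ?ltr01.
move=> x Qx hx i; have [k [ks [_ [hk1 [_ hk2]]]]] := hs x hx.
have [ik|ik] := ltnP i k; last by apply: le_trans (hk1 i ik) _; rewrite lerDr ler0n.
have := hk2 i ik; rewrite subr0 => h; apply/ltW/(lt_le_trans h).
by apply: le_trans (_ : K0%:R <= _); [rewrite ler_nat hK0 | rewrite lerDl ler01].
Qed.

Lemma op_normle_scale c (a : K) x :
  (forall x, QpN abs x -> normle abs x 1 -> normle abs (A x) c) ->
  a != 0 -> QpN abs x -> normle abs x (abs a) -> normle abs (A x) (c * abs a).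
Proof.
move=> hc a0 Qx hx.
have aa : 0 < abs a by rewrite lt_def abs_ge0 andbT; apply/eqP => /abs_eq0; apply/eqP.
have hx' : normle abs (fun i => a^-1 * x i) 1.
  by move=> i; rewrite abs_mul abs_inv ler_pdivrMl // mulr1.
have Qx' : QpN abs (fun i => a^-1 * x i) by exists 0%N => i _; apply: hx'.
have := hc _ Qx' hx'; rewrite op_scale // => h i.
by have := h i; rewrite abs_mul abs_inv ler_pdivrMl // mulrC.
Qed.

End Operator.

(** * Compact operators *)

Lemma pairs_bound (s : seq (nat * nat)) :
  exists N, forall ij, ij \in s -> (ij.1 < N)%N /\ (ij.2 < N)%N.
Proof.
elim: s => [|a s [N hN]]; first by exists 0%N.
exists (maxn (maxn a.1 a.2).+1 N) => ij; rewrite inE => /orP [/eqP ->|/hN [h1 h2]].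
  by rewrite !leq_max !ltnS !leq_max !leqnn /= orbT.
by rewrite !leq_max h1 h2 !orbT.
Qed.

Lemma entries_small_outside A e : entries_to_zero abs A -> 0 < e ->
  exists N, forall i j, ((N <= i) || (N <= j))%N -> abs (entry A i j) <= e.
Proof.
move=> ent e0; have [s hs] := ent e e0; have [N hN] := pairs_bound s.
exists N => i j hij; rewrite leNgt; apply/negP => /hs /hN /= [h1 h2].
by move: hij; rewrite (leqNgt N i) (leqNgt N j) h1 h2.
Qed.

Lemma entries_bounded A : entries_to_zero abs A ->
  exists c, 1 <= c /\ forall i j, abs (entry A i j) <= c.
Proof.
move=> ent; have [s hs] := ent 1 ltr01.
have [c [c1 hc]] : exists c, 1 <= c /\ forall ij, ij \in s -> abs (entry A ij.1 ij.2) <= c.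
  elim: s {hs} => [|a s [c [c1 hc]]]; first by exists 1.
  exists (Num.max c (abs (entry A a.1 a.2))); split; first by rewrite le_max c1.
  move=> ij; rewrite inE => /orP [/eqP ->|/hc h]; first by rewrite le_max lexx orbT.
  by rewrite le_max h.
exists c; split => // i j; have [h|h] := lerP (abs (entry A i j)) 1; first exact: le_trans h c1.
exact: (hc (i, j) (hs i j h)).
Qed.

Definition row_sup A i : R := sup (fun t => exists j, t = abs (entry A i j)).

Lemma row_sup_ub A i j : entries_to_zero abs A -> abs (entry A i j) <= row_sup A i.
Proof.
move=> ent; have [c [_ hc]] := entries_bounded ent.
have hub : classical_sets.has_ubound (fun t : R => exists j, t = abs (entry A i j)).
  by exists c => t [k ->].
exact: (ub_le_sup hub) _ (ex_intro _ j erefl).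
Qed.

Lemma row_sup_le A i b : (forall j, abs (entry A i j) <= b) -> row_sup A i <= b.
Proof.
move=> hb; apply: ge_sup; first by exists (abs (entry A i 0%N)), 0%N.
by move=> t [k ->].
Qed.

Definition vanishing (r : nat -> R) := forall e, 0 < e -> exists N, forall i, (N <= i)%N -> r i <= e.

Lemma image_sub_box A S : is_op abs A -> entries_to_zero abs A -> norm_bounded abs S ->
  exists r m, [/\ forall i, 0 <= r i, forall i, r i <= (p%:R) ^+ m, vanishing r
    & forall y, Defs.image A S y -> box r y].
Proof.
move=> hA ent [hS1 [M hM]]; set M1 := Num.max M 1.
have M10 : 0 < M1 by rewrite lt_max ltr01 orbT.
have row0 i : 0 <= row_sup A i by apply: le_trans (abs_ge0 _) (row_sup_ub i 0%N ent).
have [c [_ hc]] := entries_bounded ent.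
have [m /ltW hm] := pRX_gt (M1 * c).
exists (fun i => M1 * row_sup A i), m; split.
- by move=> i; apply: mulr_ge0; [exact: ltW | exact: row0].
- move=> i; apply: le_trans hm; apply: ler_wpM2l; first exact: ltW.
  exact: row_sup_le.
- move=> e e0; have [N hN] := entries_small_outside ent (divr_gt0 e0 M10).
  exists N => i hi; rewrite -ler_pdivlMl // mulrC.
  by apply: row_sup_le => j; apply: hN; rewrite hi.
- move=> y [x [Sx ->]] i; apply: (op_abs_le hA (hS1 _ Sx)).
    by apply: mulr_ge0; [exact: ltW | exact: row0].
  move=> j; rewrite abs_mul; apply: ler_pM; rewrite ?abs_ge0 ?row_sup_ub //.
  by rewrite le_max hM.
Qed.

Lemma tau_closure_of_mem S x : (forall x, S x -> QpN abs x) -> S x -> tau_closure abs S x.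
Proof. by move=> hS Sx; split=> [|U _ Ux]; [exact: hS | exists x]. Qed.

Lemma norm_closure_of_mem S x : (forall x, S x -> QpN abs x) -> S x -> norm_closure abs S x.
Proof. by move=> hS Sx; split=> [|U _ Ux]; [exact: hS | exists x]. Qed.

Lemma image_QpN A S : is_op abs A -> (forall x, S x -> QpN abs x) ->
  forall y, Defs.image A S y -> QpN abs y.
Proof. by move=> hA hS y [x [Sx ->]]; apply/(op_QpN hA)/hS. Qed.

Lemma finite_pairs_of_rows (f : nat -> nat -> R) e N :
  (forall i j, (N <= i)%N -> f i j <= e) ->
  (forall i, exists J, forall j, (J <= j)%N -> f i j < e) ->
  exists s : seq (nat * nat), forall i j, e < f i j -> (i, j) \in s.
Proof.
move=> hrow hdec; have [Jf hJf] := boolp.choice hdec.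
have [J hJ] : exists J, forall i, (i < N)%N -> (Jf i <= J)%N.
  elim: N {hrow} => [|N [J hJ]]; first by exists 0%N.
  exists (maxn J (Jf N)) => i; rewrite ltnS leq_eqVlt => /orP [/eqP ->|hi].
    exact: leq_maxr.
  exact: leq_trans (hJ _ hi) (leq_maxl _ _).
exists [seq (i, j) | i <- iota 0 N, j <- iota 0 J] => i j hij.
have iN : (i < N)%N by rewrite ltnNge; apply/negP => /(hrow _ j); rewrite leNgt hij.
have jJ : (j < J)%N.
  rewrite ltnNge; apply/negP => hj.
  by have := hJf i j (leq_trans (hJ i iN) hj); rewrite ltNge (ltW hij).
by apply: allpairs_f; rewrite mem_iota add0n.
Qed.

Lemma entries_to_zero_of_rows A : is_op abs A ->
  (forall e, 0 < e -> exists N, forall i j, (N <= i)%N -> abs (entry A i j) <= e) ->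
  entries_to_zero abs A.
Proof.
move=> hA hrows e e0; have [N hN] := hrows e e0.
exact: (finite_pairs_of_rows hN (fun i => entry_row_decay hA i e0)).
Qed.

Lemma entries_to_zero_of_cols A : is_op abs A ->
  (forall e, 0 < e -> exists J, forall i j, (J <= j)%N -> abs (entry A i j) <= e) ->
  entries_to_zero abs A.
Proof.
move=> hA hcols e e0; have [J hJ] := hcols e e0.
have [s hs] := finite_pairs_of_rows (f := fun j i => abs (entry A i j)) (fun j i => hJ i j)
  (fun j => entry_col_decay hA j e0).
by exists [seq (ij.2, ij.1) | ij <- s] => i j /hs h; apply/mapP; exists (j, i).
Qed.

(* Test the hypothesis on the bounded family p^k delta_j. *)
Lemma entries_to_zero_of_image_XN A : is_op abs A ->
  (forall S, norm_bounded abs S -> exists N, forall x, S x -> XN N (A x)) ->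
  entries_to_zero abs A.
Proof.
move=> hA hS; apply: entries_to_zero_of_rows => // e e0.
have [k [_ hk]] := rho_small 0 e0.
set c : K := (p%:R)^-1 ^+ k.
pose S x := exists j, x = (fun i => c * delta K j i).
have Sb : norm_bounded abs S.
  split=> [x [j ->]|]; first exact: QpN_scale_delta.
  exists (abs c) => x [j ->] i; rewrite abs_mul; apply: ler_piMr; first exact: abs_ge0.
  by rewrite /delta; case: eqP => _; rewrite ?abs1 ?abs0 ?ler01.
have [N hN] := hS S Sb; exists N => i j hi.
have := hN _ (ex_intro _ j erefl) i hi.
rewrite op_scale_delta // /Defs.Zp abs_mul abs_pinvX => h.
apply: le_trans (ltW hk); rewrite rhoE -[X in _ <= X]mul1r ler_pdivlMr ?pRX_gt0 //.
by rewrite mulrC.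
Qed.

Lemma entries_to_zero_of_compact_op A : is_op abs A -> compact_op abs A ->
  entries_to_zero abs A.
Proof.
move=> hA hc; apply: entries_to_zero_of_image_XN => // S hS.
have [hC1 hC2] := hc S hS.
have [N hN] := compact_sub_XN (fun U hU cov => hC2 nat U hU cov) hC1 tau_open_XN.
exists N => x Sx; apply/hN/tau_closure_of_mem; [exact: image_QpN hS.1 | by exists x].
Qed.

Lemma entries_to_zero_of_norm_compact_op A : is_op abs A -> norm_compact_op abs A ->
  entries_to_zero abs A.
Proof.
move=> hA hc; apply: entries_to_zero_of_image_XN => // S hS.
have [hC1 hC2] := hc S hS.
have [N hN] := compact_sub_XN (fun U hU cov => hC2 nat U hU cov) hC1 norm_open_XN.
exists N => x Sx; apply/hN/norm_closure_of_mem; [exact: image_QpN hS.1 | by exists x].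
Qed.

Section Box.
Variables (r : nat -> R) (m : nat) (S : (nat -> K) -> Prop).
Hypotheses (r_ge0 : forall i, 0 <= r i) (r_le : forall i, r i <= (p%:R) ^+ m).
Hypotheses (r_vanishing : vanishing r) (S_box : forall y, S y -> box r y).

Lemma box_XN : exists N, forall y, box r y -> XN N y.
Proof.
have [N hN] := r_vanishing ltr01.
by exists N => y hy j hj; apply: le_trans (hy j) (hN j hj).
Qed.

Lemma tau_closure_box y : tau_closure abs S y -> box r y.
Proof.
move=> [Qy hy] i; rewrite leNgt; apply/negP => hlt.
have [y' [[_ h1] h2]] := hy _ (tau_open_abs_gt i (r_ge0 i)) (conj Qy hlt).
by move: (S_box h2 i); rewrite leNgt h1.
Qed.

Lemma norm_closure_box y : norm_closure abs S y -> box r y.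
Proof.
move=> [Qy hy] i; rewrite leNgt; apply/negP => hlt.
have [y' [[_ h1] h2]] := hy _ (norm_open_abs_gt i (r_ge0 i)) (conj Qy hlt).
by move: (S_box h2 i); rewrite leNgt h1.
Qed.

Lemma rel_tau_compact_box : rel_tau_compact abs S.
Proof.
have [N hN] := box_XN.
have boxXP y : box r y -> XP abs (iota 0 N) y by move/hN/XP_iota.
split=> [x []//|I U hU cov].
apply: (box_compact r_le tau_closure_box) cov.
- move=> z hz hadh; split=> [|U0 hU0 U0z]; first by exists N; apply: hN.
  have [n [e [e0 he]]] := hU0.2 (iota 0 N) z (boxXP _ hz) U0z.
  have [y [Cy cy]] := hadh n e e0.
  have U0y : U0 y by apply: he => //; apply/boxXP/tau_closure_box.
  exact: Cy.2 U0 hU0 U0y.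
- move=> i x Cx Ux.
  have [n [e [e0 he]]] := (hU i).2 _ x (boxXP _ (tau_closure_box Cx)) Ux.
  by exists n, e; split => // y Cy cy; apply: he => //; apply/boxXP/tau_closure_box.
Qed.

Lemma nball_of_close N x y e : box r x -> box r y -> QpN abs y -> 0 < e ->
  (forall i, (N <= i)%N -> r i <= e / 4) -> close N (e / 2) x y -> nball abs x e y.
Proof.
move=> bx by_ Qy e0 hr cy; split => //; exists (e / 2); split; first lra.
move=> i; have [iN|iN] := ltnP i N; first exact: ltW (cy i iN).
apply: abs_sub_le; [apply: le_trans (by_ i) _ | apply: le_trans (bx i) _];
  apply: le_trans (hr i iN) _; lra.
Qed.

Lemma rel_norm_compact_box : rel_norm_compact abs S.
Proof.
have [N hN] := box_XN.
split=> [x []//|I U hU cov].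
apply: (box_compact r_le norm_closure_box) cov.
- move=> z hz hadh; split=> [|U0 hU0 U0z]; first by exists N; apply: hN.
  have [e [e0 he]] := hU0.2 z U0z.
  have [N' hN'] : exists N', forall i, (N' <= i)%N -> r i <= e / 4.
    by apply: r_vanishing; lra.
  have [y [Cy cy]] := hadh N' (e / 2) ltac:(lra).
  have U0y : U0 y by apply/he/(nball_of_close hz (norm_closure_box Cy) Cy.1 e0 hN' cy).
  exact: Cy.2 U0 hU0 U0y.
- move=> i x Cx Ux; have [e [e0 he]] := (hU i).2 x Ux.
  have [N' hN'] : exists N', forall i, (N' <= i)%N -> r i <= e / 4.
    by apply: r_vanishing; lra.
  exists N', (e / 2); split=> [|y Cy cy]; first lra.
  by apply: he; apply: (nball_of_close (norm_closure_box Cx) (norm_closure_box Cy) Cy.1 e0 hN' cy).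
Qed.

End Box.

Lemma compact_op_of_entries_to_zero A : is_op abs A -> entries_to_zero abs A ->
  compact_op abs A.
Proof.
move=> hA ent S hS; have [r [m [r0 hr hv hb]]] := image_sub_box hA ent hS.
exact: rel_tau_compact_box r0 hr hv hb.
Qed.

Lemma norm_compact_op_of_entries_to_zero A : is_op abs A -> entries_to_zero abs A ->
  norm_compact_op abs A.
Proof.
move=> hA ent S hS; have [r [m [r0 hr hv hb]]] := image_sub_box hA ent hS.
exact: rel_norm_compact_box r0 hr hv hb.
Qed.

(** * The ideal property *)

Lemma is_op0 : is_op abs (fun _ _ => 0).
Proof.
split=> [x _|x y _ _|a x _ _|U hU]; first exact: QpN0.
- by apply: boolp.funext => i; rewrite addr0.
- by apply: boolp.funext => i; rewrite mulr0.
have [h|h] := boolp.pselect (U (fun _ => 0)).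
  apply: (@tau_open_ext (QpN abs)); [| by move=> x [] | exact: tau_open_QpN].
  by move=> x Qx; split => // _; split.
apply: (@tau_open_ext (fun _ => False)); [| by move=> x [] | by split].
by move=> x Qx; split => // [[_ /h]].
Qed.

Lemma is_opD A B : is_op abs A -> is_op abs B -> is_op abs (fun x i => A x i + B x i).
Proof.
move=> hA hB; split.
- by move=> x Qx; apply: QpND; apply: op_QpN.
- move=> x y Qx Qy; rewrite (opD hA Qx Qy) (opD hB Qx Qy).
  by apply: boolp.funext => i; rewrite addrACA.
- move=> a x ha Qx; rewrite (opZ hA ha Qx) (opZ hB ha Qx).
  by apply: boolp.funext => i; rewrite mulrDr.
move=> U [hU1 hU2]; split=> [x []//|P x hx [Qx Ux]].
have [N1 h1] := op_QpN hA Qx; have [N2 h2] := op_QpN hB Qx.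
have hAx : XN (maxn N1 N2) (A x) by apply: XN_mono h1; apply: leq_maxl.
have hBx : XN (maxn N1 N2) (B x) by apply: XN_mono h2; apply: leq_maxr.
have [n [e [e0 he]]] : exists n e, 0 < e /\ forall y, XP abs (iota 0 (maxn N1 N2)) y ->
    close n e (fun i => A x i + B x i) y -> U y.
  by apply: hU2 => //; apply/XP_iota => j hj; apply: zpD; [apply: hAx | apply: hBx].
have [n1 [e1 [e10 k1]]] := op_near hA n hx hAx e0.
have [n2 [e2 [e20 k2]]] := op_near hB n hx hBx e0.
exists (maxn n1 n2), (Num.min e1 e2); split; first by rewrite lt_min e10 e20.
move=> y hy cy; split; first exact: XP_QpN hy.
have [a1 a2] : XN (maxn N1 N2) (A y) /\ close n e (A x) (A y).
  apply: k1 => // i hi; have := cy i (leq_trans hi (leq_maxl _ _)).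
  by rewrite lt_min => /andP [].
have [b1 b2] : XN (maxn N1 N2) (B y) /\ close n e (B x) (B y).
  apply: k2 => // i hi; have := cy i (leq_trans hi (leq_maxr _ _)).
  by rewrite lt_min => /andP [].
apply: he => [|i hi]; first by apply/XP_iota => j hj; apply: zpD; [apply: a1 | apply: b1].
have -> : A y i + B y i - (A x i + B x i) = (A y i - A x i) + (B y i - B x i) by ring.
by apply: abs_add_lt; [apply: a2 | apply: b2].
Qed.

Lemma is_opN A : is_op abs A -> is_op abs (fun x i => - A x i).
Proof.
move=> hA; split.
- by move=> x Qx; apply: QpNN; apply: op_QpN.
- move=> x y Qx Qy; rewrite (opD hA Qx Qy).
  by apply: boolp.funext => i; rewrite opprD.
- move=> a x ha Qx; rewrite (opZ hA ha Qx).
  by apply: boolp.funext => i; rewrite mulrN.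
move=> U [hU1 hU2]; split=> [x []//|P x hx [Qx Ux]].
have [N h1] := op_QpN hA Qx.
have hAx : XP abs (iota 0 N) (fun i => - A x i).
  by apply/XP_iota => j hj; apply: zpN; apply: h1.
have [n [e [e0 he]]] := hU2 _ _ hAx Ux.
have [n1 [e1 [e10 k1]]] := op_near hA n hx h1 e0.
exists n1, e1; split => // y hy cy; split; first exact: XP_QpN hy.
have [a1 a2] := k1 y hy cy.
apply: he => [|i hi]; first by apply/XP_iota => j hj; apply: zpN; apply: a1.
by rewrite -opprD absN; apply: a2.
Qed.

Lemma is_op_comp A B : is_op abs A -> is_op abs B -> is_op abs (fun x => A (B x)).
Proof.
move=> hA hB; split.
- by move=> x Qx; apply: (op_QpN hA); apply: (op_QpN hB).
- move=> x y Qx Qy; rewrite (opD hB Qx Qy).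
  by rewrite (opD hA (op_QpN hB Qx) (op_QpN hB Qy)).
- move=> a x ha Qx; rewrite (opZ hB ha Qx).
  by rewrite (opZ hA ha (op_QpN hB Qx)).
move=> U hU; apply: tau_open_ext (op_cont hB (op_cont hA hU)); last by move=> x [].
move=> x Qx; split=> [[_ [_ h]]|[_ h]] //.
by split => //; split => //; apply: (op_QpN hB).
Qed.

Lemma entries_to_zero0 : entries_to_zero abs (fun _ _ => 0).
Proof.
by move=> e e0; exists nil => i j; rewrite /entry abs0 => /(lt_trans e0); rewrite ltxx.
Qed.

Lemma entries_to_zeroD A B : entries_to_zero abs A -> entries_to_zero abs B ->
  entries_to_zero abs (fun x i => A x i + B x i).
Proof.
move=> eA eB e e0; have [s1 h1] := eA e e0; have [s2 h2] := eB e e0.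
exists (s1 ++ s2) => i j; rewrite /entry mem_cat => h.
have := lt_le_trans h (abs_ultra _ _).
by rewrite lt_max => /orP [/h1 ->|/h2 ->]; rewrite ?orbT.
Qed.

Lemma entries_to_zeroN A : entries_to_zero abs A -> entries_to_zero abs (fun x i => - A x i).
Proof.
by move=> eA e e0; have [s hs] := eA e e0; exists s => i j; rewrite /entry absN; apply: hs.
Qed.

(* A column p^-k-small in sup norm is mapped by the bounded operator T to a
   column of norm at most c p^-k. *)
Lemma entries_to_zero_comp T A : is_op abs T -> is_op abs A -> entries_to_zero abs A ->
  entries_to_zero abs (fun x => T (A x)).
Proof.
move=> hT hA ent; apply: entries_to_zero_of_cols; first exact: is_op_comp.
move=> e e0; have [c [c0 hc]] := op_unit_ball_bounded hT.
have [k [_ hk]] := rho_small 0 (divr_gt0 e0 c0).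
have [J hJ] := entries_small_outside ent (rho_gt0 k).
have a0 : ((p%:R : K) ^+ k) != 0 by apply/expf_neq0/pK_neq0.
have aa : abs ((p%:R : K) ^+ k) = rho k by rewrite absX abs_p.
exists J => i j hj.
have hcol : normle abs (A (delta K j)) (abs ((p%:R : K) ^+ k)).
  by move=> l; rewrite aa; apply: hJ; rewrite hj orbT.
have := op_normle_scale hT hc a0 (op_QpN hA (QpN_delta j)) hcol i; rewrite aa => h.
apply: le_trans h _; rewrite mulrC -ler_pdivlMr //; exact: ltW.
Qed.

Lemma compact_op_compr A T : compact_op abs A -> is_op abs T ->
  compact_op abs (fun x => A (T x)).
Proof.
move=> cA hT S [hS1 [M hM]].
have [c [c0 hc]] := op_unit_ball_bounded hT.
have [m hm] := pRX_gt M.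
set a : K := (p%:R)^-1 ^+ m.
have a0 : a != 0 by apply/expf_neq0; rewrite invr_eq0 pK_neq0.
have hTS : norm_bounded abs (Defs.image T S).
  split; first exact: image_QpN hT hS1.
  exists (c * abs a) => y [x [Sx ->]]; apply: (op_normle_scale hT hc a0 (hS1 _ Sx)) => i.
  by rewrite abs_pinvX; apply/ltW/(le_lt_trans (hM x Sx i) hm).
suff -> : Defs.image (fun x => A (T x)) S = Defs.image A (Defs.image T S) by exact: cA.
apply: boolp.funext => y; apply: boolp.propext; split.
  by move=> [x [Sx ->]]; exists (T x); split => //; exists x.
by move=> [x' [[x [Sx ->]] ->]]; exists x.
Qed.

(** * Adjoints *)

Definition has_sum (u : nat -> K) (l : K) := forall e, 0 < e -> exists N,
  forall n, (N <= n)%N -> abs (\sum_(j < n) u j - l) < e.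

Lemma has_sum_unique u l l' : has_sum u l -> has_sum u l' -> l = l'.
Proof.
move=> h1 h2; apply/eqP; rewrite -subr_eq0; apply/eqP/abs_le0.
apply: le_of_le_max_eps => // e e0.
have [N1 k1] := h1 e e0; have [N2 k2] := h2 e e0.
have -> : l - l' = (\sum_(j < maxn N1 N2) u j - l') - (\sum_(j < maxn N1 N2) u j - l) by ring.
by rewrite le_max ltW // abs_sub_lt // ?k1 ?k2 ?leq_maxl ?leq_maxr.
Qed.

Lemma has_sum_ext u v l : (forall j, u j = v j) -> has_sum u l -> has_sum v l.
Proof.
move=> e h e' e0; have [N hN] := h e' e0; exists N => n hn.
by rewrite (eq_bigr (fun j : 'I_n => u j)); [apply: hN | move=> j _; rewrite e].
Qed.

Lemma has_sumD u v l l' : has_sum u l -> has_sum v l' ->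
  has_sum (fun j => u j + v j) (l + l').
Proof.
move=> h1 h2 e e0; have [N1 k1] := h1 e e0; have [N2 k2] := h2 e e0.
exists (maxn N1 N2) => n hn; rewrite big_split /=.
have -> : \sum_(j < n) u j + \sum_(j < n) v j - (l + l') =
  (\sum_(j < n) u j - l) + (\sum_(j < n) v j - l') by ring.
by apply: abs_add_lt; [apply: k1 | apply: k2]; apply: leq_trans hn; rewrite ?leq_maxl ?leq_maxr.
Qed.

Lemma has_sumZ c u l : has_sum u l -> has_sum (fun j => c * u j) (c * l).
Proof.
move=> h e e0.
have c1 : 0 < abs c + 1 by apply: ltr_wpDl; rewrite ?abs_ge0 ?ltr01.
have [N hN] := h (e / (abs c + 1)) (divr_gt0 e0 c1).
exists N => n hn; rewrite -mulr_sumr -mulrBr abs_mul.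
have := hN n hn; rewrite ltr_pdivlMr // => h2.
apply: le_lt_trans h2; rewrite mulrC; apply: ler_wpM2l; first exact: abs_ge0.
by rewrite lerDl ler01.
Qed.

Lemma has_sumZr c u l : has_sum u l -> has_sum (fun j => u j * c) (l * c).
Proof. by move=> h; rewrite mulrC; apply: has_sum_ext (has_sumZ c h) => j; apply: mulrC. Qed.

Lemma has_sumB u v l l' : has_sum u l -> has_sum v l' ->
  has_sum (fun j => u j - v j) (l - l').
Proof.
move=> h1 h2; have := has_sumD h1 (has_sumZ (-1) h2).
by rewrite mulN1r; apply: has_sum_ext => j; rewrite mulN1r.
Qed.

Lemma has_sum_finite_support u N : (forall j, (N <= j)%N -> u j = 0) ->
  has_sum u (\sum_(j < N) u j).
Proof.
move=> h e e0; exists N => n hn; rewrite -(subnKC hn).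
suff -> : \sum_(j < N + (n - N)) u j = \sum_(j < N) u j by rewrite subrr abs0.
elim: (n - N)%N => [|d IH]; first by rewrite addn0.
by rewrite addnS big_ord_recr /= IH h ?addr0 // leq_addr.
Qed.

Lemma has_sum_abs_le u l b : has_sum u l -> 0 <= b ->
  (forall j, abs (u j) <= b) -> abs l <= b.
Proof.
move=> h b0 hb; apply: le_of_le_max_eps => // e e0.
have [N hN] := h e e0; have h1 := hN N (leqnn N).
have h2 : abs (\sum_(j < N) u j) <= b by apply: abs_sum_le.
have -> : l = - (\sum_(j < N) u j - l) + \sum_(j < N) u j by ring.
apply: le_trans (abs_ultra _ _) _; rewrite absN.
by rewrite ge_max !le_max (ltW h1) h2 orbT.
Qed.

(* Ultrametric Cauchy criterion. *)
Lemma has_sum_of_vanishing u :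
  (forall e, 0 < e -> exists N, forall j, (N <= j)%N -> abs (u j) < e) ->
  exists l, has_sum u l.
Proof.
move=> h; apply: abs_complete => e e0; have [N hN] := h e e0; exists N.
have key m n : (N <= n)%N -> (n <= m)%N ->
    abs (\sum_(j < m) u j - \sum_(j < n) u j) < e.
  move=> hn hnm; rewrite -(subnKC hnm).
  have -> : \sum_(j < n + (m - n)) u j - \sum_(j < n) u j = \sum_(j < m - n) u (n + j)%N.
    elim: (m - n)%N => [|d IH]; first by rewrite addn0 subrr big_ord0.
    by rewrite addnS !big_ord_recr /= -IH addrAC.
  apply: (abs_sum_lt (f := fun j => u (n + j)%N)) => // j _.
  by apply: hN; apply: leq_trans hn (leq_addr _ _).
move=> m n hm hn; have [nm|mn] := leqP n m; first exact: key.
by rewrite absB; apply: key => //; apply: ltnW.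
Qed.

Lemma has_sum_tail_le (t : nat -> K) L N : has_sum t L ->
  (forall j, (N <= j)%N -> abs (t j) <= 1) -> abs (L - \sum_(j < N) t j) <= 1.
Proof.
move=> h ht; pose t' j := if (j < N)%N then t j else 0.
have -> : \sum_(j < N) t j = \sum_(j < N) t' j by apply: eq_bigr => j _; rewrite /t' ltn_ord.
have hf : has_sum t' (\sum_(j < N) t' j).
  by apply: has_sum_finite_support => j hj; rewrite /t' ltnNge hj.
apply: has_sum_abs_le (has_sumB h hf) ler01 _ => j; rewrite /t'.
by case: ifP => hj; rewrite ?subrr ?abs0 ?ler01 // subr0; apply: ht; rewrite leqNgt hj.
Qed.

Definition series_sum (u : nat -> K) : K :=
  if boolp.pselect (exists l, has_sum u l) is left h then proj1_sig (boolp.cid h) else 0.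

Lemma series_sumP u : (exists l, has_sum u l) -> has_sum u (series_sum u).
Proof.
move=> h; rewrite /series_sum; case: boolp.pselect => // h'.
exact: proj2_sig (boolp.cid h').
Qed.

Lemma op_has_sum A x i : is_op abs A -> QpN abs x ->
  has_sum (fun j => x j * entry A i j) (A x i).
Proof.
move=> hA Qx e e0; have [n0 hn0] := op_series hA i Qx e0.
by exists n0 => n hn; rewrite absB; apply: hn0.
Qed.

Lemma sum_mul_delta (g : nat -> K) i N :
  \sum_(l < N) g l * delta K i l = if (i < N)%N then g i else 0.
Proof.
elim: N => [|N IH]; first by rewrite big_ord0.
rewrite big_ord_recr /= IH /delta; have [->|iN] := eqVneq N i.
  by rewrite ltnn ltnSn add0r mulr1.
by rewrite mulr0 addr0 [in RHS]ltnS [in RHS]leq_eqVlt eq_sym (negbTE iN).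
Qed.

(* Pair c delta_i against delta_j: both truncated sums reduce to at most one term,
   and a term dropped by the truncation is itself in Z_p. *)
Lemma adjoint_entry_Zp A B c i j : is_op abs A -> is_adjoint abs A B ->
  Defs.Zp abs (c * entry B i j - c * entry A j i).
Proof.
move=> hA hadj.
have [N [htail hsum]] := hadj _ _ (QpN_scale_delta c i) (QpN_delta j).
rewrite (op_scale_delta hA) in htail hsum.
have e2 : \sum_(l < N) c * delta K i l * B (delta K j) l =
    \sum_(l < N) c * B (delta K j) l * delta K i l by apply: eq_bigr => l _; rewrite mulrAC.
rewrite e2 (sum_mul_delta (fun l => c * entry A l i))
  (sum_mul_delta (fun l => c * B (delta K j) l)) in hsum.
set X := if (j < N)%N then c * entry A j i else 0.
set Y := if (i < N)%N then c * entry B i j else 0.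
have hXY : Defs.Zp abs (X - Y) := hsum.
have hX : Defs.Zp abs (c * entry A j i - X).
  rewrite /X; case: ltnP => hj; first by rewrite subrr; exact: zp0.
  by have [+ _] := htail j hj; rewrite /delta eqxx mulr1 subr0.
have hY : Defs.Zp abs (c * entry B i j - Y).
  rewrite /Y; case: ltnP => hi; first by rewrite subrr; exact: zp0.
  by have [_ +] := htail i hi; rewrite /delta eqxx mulr1 subr0.
have -> : c * entry B i j - c * entry A j i = (c * entry B i j - Y) - (c * entry A j i - X) - (X - Y).
  by ring.
by apply: zpB; first apply: zpB.
Qed.

Lemma adjoint_entry A B : is_op abs A -> is_adjoint abs A B ->
  forall i j, entry B i j = entry A j i.
Proof.
move=> hA hadj i j; apply/eqP; rewrite -subr_eq0; apply/eqP/abs_le0.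
apply: le_of_le_max_eps => // e e0; have [k [_ hk]] := rho_small 0 e0.
have := adjoint_entry_Zp ((p%:R)^-1 ^+ k) i j hA hadj.
rewrite /Defs.Zp -mulrBr abs_mul abs_pinvX mulrC -ler_pdivlMr ?pRX_gt0 // mul1r -rhoE.
by move=> h; rewrite le_max (le_trans h (ltW hk)).
Qed.

Lemma entries_to_zero_transpose A B : (forall i j, entry B i j = entry A j i) ->
  entries_to_zero abs A -> entries_to_zero abs B.
Proof.
move=> e ent e' e0; have [s hs] := ent e' e0.
exists [seq (ij.2, ij.1) | ij <- s] => i j; rewrite e => /hs h.
by apply/mapP; exists (j, i).
Qed.

(* By additivity, continuity at x reduces to continuity at 0. *)
Lemma tau_continuous_of_additive B : (forall x, QpN abs x -> QpN abs (B x)) ->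
  (forall x y, QpN abs x -> QpN abs y -> B (fun i => x i + y i) = (fun i => B x i + B y i)) ->
  (forall P e, 0 < e -> e <= 1 -> exists n e', 0 < e' /\
     forall y, XP abs P y -> close n e' (fun _ => 0) y -> forall j, abs (B y j) < e) ->
  forall U, tau_open abs U -> tau_open abs (fun x => QpN abs x /\ U (B x)).
Proof.
move=> hQB hadd hloc U [hU1 hU2]; split=> [x []//|P x hx [Qx Ux]].
have [N0 hN0] := hQB x Qx.
have [n [e [e0 he]]] := hU2 (iota 0 N0) (B x) (proj2 (XP_iota _ _) hN0) Ux.
have e10 : 0 < Num.min e 1 by rewrite lt_min e0 ltr01.
have min_e : Num.min e 1 <= e by rewrite ge_min lexx.
have min_1 : Num.min e 1 <= 1 by rewrite ge_min lexx orbT.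
have [n' [e' [e'0 hl]]] := hloc P _ e10 min_1.
exists n', e'; split => // y hy cy; have Qy := XP_QpN hy.
have hd : XP abs P (fun i => y i - x i) by move=> j hj; apply: zpB; [apply: hy | apply: hx].
have hb := hl _ hd (fun i hi => ltac:(rewrite subr0; exact: cy i hi)).
have -> : B y = (fun i => B x i + B (fun i => y i - x i) i).
  rewrite -hadd //; last exact: QpNB.
  by congr B; apply: boolp.funext => i; rewrite addrC subrK.
split => //; apply: he => [|i hi].
  apply/XP_iota => j hj; apply: zpD; first exact: hN0.
  exact/ltW/(lt_le_trans (hb j) min_1).
by rewrite addrC addKr; apply: lt_le_trans (hb i) min_e.
Qed.

Lemma truncated_double_sum_Zp (a : nat -> nat -> K) (r c : nat -> K) N :
  (forall i j, ((N <= i) || (N <= j))%N -> abs (a i j) <= 1) ->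
  (forall i, has_sum (a i) (r i)) -> (forall j, has_sum (fun i => a i j) (c j)) ->
  Defs.Zp abs (\sum_(i < N) r i - \sum_(j < N) c j).
Proof.
move=> ha hr hc.
have rows : abs (\sum_(i < N) r i - \sum_(i < N) \sum_(j < N) a i j) <= 1.
  rewrite -sumrB; apply: (abs_sum_le (f := fun i => r i - \sum_(j < N) a i j) ler01).
  by move=> i _; apply: has_sum_tail_le (hr i) _ => j hj; apply: ha; rewrite hj orbT.
have cols : abs (\sum_(j < N) c j - \sum_(j < N) \sum_(i < N) a i j) <= 1.
  rewrite -sumrB; apply: (abs_sum_le (f := fun j => c j - \sum_(i < N) a i j) ler01).
  by move=> j _; apply: has_sum_tail_le (hc j) _ => i hi; apply: ha; rewrite hi.
rewrite exchange_big /= in cols.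
have -> : \sum_(i < N) r i - \sum_(j < N) c j =
    (\sum_(i < N) r i - \sum_(i < N) \sum_(j < N) a i j) -
    (\sum_(j < N) c j - \sum_(i < N) \sum_(j < N) a i j) by ring.
exact: zpB.
Qed.

Section Transpose.
Variable A : (nat -> K) -> (nat -> K).
Hypothesis hA : is_op abs A.
Hypothesis ent : entries_to_zero abs A.

Definition transpose_op (eta : nat -> K) : nat -> K :=
  fun j => series_sum (fun i => eta i * entry A i j).

Lemma transpose_has_sum eta j : QpN abs eta ->
  has_sum (fun i => eta i * entry A i j) (transpose_op eta j).
Proof.
move=> Qe; apply/series_sumP/has_sum_of_vanishing => e e0.
have [M [M1 hM]] := QpN_normle Qe; have M0 : 0 < M := lt_le_trans ltr01 M1.
have [N hN] := entries_small_outside ent (divr_gt0 e0 (mulr_gt0 M0 (ltr0Sn _ 1))).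
exists N => i hi; rewrite abs_mul.
apply: le_lt_trans (_ : M * (e / (M * 2)) < e).
  by apply: ler_pM; rewrite ?abs_ge0 //; apply: hN; rewrite hi.
rewrite (_ : M * (e / (M * 2)) = e / 2); first lra.
by field; rewrite gt_eqF.
Qed.

Lemma transpose_abs_le eta j b : QpN abs eta -> 0 <= b ->
  (forall i, abs (eta i * entry A i j) <= b) -> abs (transpose_op eta j) <= b.
Proof. by move=> Qe b0; apply: has_sum_abs_le (transpose_has_sum j Qe) b0. Qed.

Lemma transpose_QpN eta : QpN abs eta -> QpN abs (transpose_op eta).
Proof.
move=> Qe; have [M [M1 hM]] := QpN_normle Qe; have M0 : 0 < M := lt_le_trans ltr01 M1.
have Mi0 : 0 < M^-1 by rewrite invr_gt0.
have [N hN] := entries_small_outside ent Mi0.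
exists N => j hj; apply: transpose_abs_le => // i; rewrite abs_mul.
apply: le_trans (_ : M * M^-1 <= 1); last by rewrite mulfV ?gt_eqF.
by apply: ler_pM; rewrite ?abs_ge0 //; apply: hN; rewrite hj orbT.
Qed.

Lemma transposeD x y : QpN abs x -> QpN abs y ->
  transpose_op (fun i => x i + y i) = (fun i => transpose_op x i + transpose_op y i).
Proof.
move=> Qx Qy; apply: boolp.funext => j.
apply: (has_sum_unique (transpose_has_sum j (QpND Qx Qy))).
by apply: has_sum_ext (has_sumD (transpose_has_sum j Qx) (transpose_has_sum j Qy)) => i; rewrite mulrDl.
Qed.

Lemma transposeZ a x : Defs.Zp abs a -> QpN abs x ->
  transpose_op (fun i => a * x i) = (fun i => a * transpose_op x i).
Proof.
move=> ha Qx; apply: boolp.funext => j.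
apply: (has_sum_unique (transpose_has_sum j (QpNZ ha Qx))).
by apply: has_sum_ext (has_sumZ a (transpose_has_sum j Qx)) => i; rewrite mulrA.
Qed.

(* Near 0 in X_P the first coordinates of y are small and the remaining ones
   are bounded, while the corresponding entries are small. *)
Lemma transpose_near0 P e : 0 < e -> e <= 1 -> exists n e', 0 < e' /\
  forall y, XP abs P y -> close n e' (fun _ => 0) y -> forall j, abs (transpose_op y j) < e.
Proof.
move=> e0 e1; have e20 : 0 < e / 2 by lra.
have [c [c1 hc]] := entries_bounded ent; have c0 : 0 < c := lt_le_trans ltr01 c1.
have [Ns hNs] := entries_small_outside ent e20.
have [nP hnP] := seq_bound P.
exists (maxn Ns nP), (e / 2 / c); split=> [|y hy cy j]; first exact: divr_gt0.
apply: le_lt_trans (_ : e / 2 < e); last lra.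
apply: transpose_abs_le (XP_QpN hy) (ltW e20) _ => i; rewrite abs_mul.
have [iN|iN] := ltnP i (maxn Ns nP).
  have := cy i iN; rewrite subr0 => hyi.
  apply: le_trans (_ : e / 2 / c * c <= _); last by rewrite divfK ?gt_eqF.
  by apply: ler_pM; rewrite ?abs_ge0 // ltW.
apply: le_trans (_ : 1 * (e / 2) <= _); last by rewrite mul1r.
apply: ler_pM; rewrite ?abs_ge0 //.
  by apply: hy; apply/negP => /hnP; rewrite ltnNge (leq_trans (leq_maxr _ _) iN).
by apply: hNs; rewrite (leq_trans (leq_maxl _ _) iN).
Qed.

Lemma transpose_is_op : is_op abs transpose_op.
Proof.
split; [exact: transpose_QpN | exact: transposeD | exact: transposeZ |].
exact: tau_continuous_of_additive transpose_QpN transposeD transpose_near0.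
Qed.

(* Scale so that every term xi_j A_ij eta_i outside the N x N corner lies in Z_p. *)
Lemma transpose_is_adjoint : is_adjoint abs A transpose_op.
Proof.
move=> xi eta Qxi Qeta.
have [Mx [Mx1 hMx]] := QpN_normle Qxi; have [My [My1 hMy]] := QpN_normle Qeta.
have Mx0 : 0 < Mx := lt_le_trans ltr01 Mx1; have My0 : 0 < My := lt_le_trans ltr01 My1.
set eps := (Mx * My)^-1.
have one : Mx * eps * My = 1 by rewrite /eps; field; rewrite ?gt_eqF.
have eps0 : 0 < eps by rewrite invr_gt0 mulr_gt0.
have [N hN] := entries_small_outside ent eps0.
exists N; split=> [l hl|].
  have eps_ge0 := ltW eps0.
  split; rewrite /Defs.Zp abs_mul -one.
    apply: ler_pM; rewrite ?abs_ge0 //.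
    apply: (op_abs_le hA Qxi); first by rewrite mulr_ge0 // ltW.
    by move=> j; rewrite abs_mul; apply: ler_pM; rewrite ?abs_ge0 //; apply: hN; rewrite hl.
  rewrite -mulrA; apply: ler_pM; rewrite ?abs_ge0 //.
  apply: transpose_abs_le => //; first by rewrite mulr_ge0 // ltW.
  move=> i; rewrite abs_mul mulrC; apply: ler_pM; rewrite ?abs_ge0 //.
  by apply: hN; rewrite hl orbT.
apply: (truncated_double_sum_Zp (a := fun i j => xi j * entry A i j * eta i)
  (r := fun i => A xi i * eta i) (c := fun j => xi j * transpose_op eta j)).
- move=> i j hij; rewrite !abs_mul -one.
  apply: ler_pM; rewrite ?mulr_ge0 ?abs_ge0 //.
  by apply: ler_pM; rewrite ?abs_ge0 //; apply: hN.
- by move=> i; apply/has_sumZr/op_has_sum.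
- move=> j; apply: has_sum_ext (has_sumZ (xi j) (transpose_has_sum j Qeta)) => i.
  by rewrite [eta i * _]mulrC mulrA.
Qed.

End Transpose.

End PadicSequences.

Theorem lemma3p2 (p : nat) (R : realType) (K : fieldType) (abs : K -> R) :
  prime p -> is_Qp p abs ->
  (forall A : (nat -> K) -> (nat -> K), is_op abs A ->
     (compact_op abs A <-> entries_to_zero abs A) /\
     (compact_op abs A <-> norm_compact_op abs A)) /\
  (* the set K(Q_p(N)) is an ideal of B(Q_p(N)) *)
  Kop abs (fun _ _ => 0) /\
  (forall A B, Kop abs A -> Kop abs B -> Kop abs (fun x i => A x i + B x i)) /\
  (forall A, Kop abs A -> Kop abs (fun x i => - A x i)) /\
  (forall A T, Kop abs A -> is_op abs T ->
     Kop abs (fun x => T (A x)) /\ Kop abs (fun x => A (T x))) /\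
  (* ... closed under taking adjoints *)
  (forall A, Kop abs A ->
     (exists B, is_op abs B /\ is_adjoint abs A B) /\
     (forall B, is_op abs B -> is_adjoint abs A B -> Kop abs B)).
Proof.
move=> hp [ge0 eq0 mul ultra habs dense compl].
have to0 A := @entries_to_zero_of_compact_op _ _ _ _ ge0 eq0 mul ultra hp habs A.
have of0 A := @compact_op_of_entries_to_zero _ _ _ _ ge0 eq0 mul ultra hp habs dense compl A.
have Kop_of A : is_op abs A -> entries_to_zero abs A -> Kop abs A.
  by move=> hA eA; split; last exact: of0.
split.
  move=> A hA; split; split; [exact: to0 | exact: of0 | |].
    move/(to0 A hA).
    exact: norm_compact_op_of_entries_to_zero ge0 eq0 mul ultra hp habs dense compl A hA.
  by move/(entries_to_zero_of_norm_compact_op ge0 eq0 mul ultra hp habs hA); apply: of0.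
split; first exact: Kop_of (is_op0 eq0) (entries_to_zero0 eq0).
split.
  move=> A B [hA /(to0 A hA) eA] [hB /(to0 B hB) eB].
  exact: Kop_of (is_opD ge0 eq0 ultra hA hB) (entries_to_zeroD ultra eA eB).
split.
  move=> A [hA /(to0 A hA) eA].
  exact: Kop_of (is_opN ge0 eq0 mul ultra hA) (entries_to_zeroN ge0 eq0 mul eA).
split.
  move=> A T [hA cA] hT; split; last first.
    split; first exact: is_op_comp.
    exact (compact_op_compr ge0 eq0 mul ultra hp habs dense compl cA hT).
  apply: Kop_of (is_op_comp hT hA) _.
  exact (entries_to_zero_comp ge0 eq0 mul ultra hp habs dense compl hT hA (to0 A hA cA)).
move=> A [hA /(to0 A hA) eA]; split.
  exists (transpose_op abs A); split; first exact (transpose_is_op ge0 eq0 mul ultra compl eA).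
  exact (transpose_is_adjoint ge0 eq0 mul ultra compl hA eA).
move=> B hB hadj; apply: Kop_of hB _.
exact: entries_to_zero_transpose (adjoint_entry ge0 eq0 mul ultra hp habs hA hadj) eA.
Qed.
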